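(* Let $a>0$. Then $$\int_0^1 g_a(x)\,dx=1-\sum_{n\ge1}\frac{\Gamma(an+1)\,\Gamma(an+n-1)}{\Gamma(an+n+2)\,\Gamma(an)}=1-\frac{a}{2(a+1)}-\frac{a\pi}{2(a+1)^2}\cot\frac{a\pi}{a+1}.$$
   Context: For $a>0$ let $\phi_a(x)=x^a-x^{a+1}$ on $[0,1]$, strictly increasing on $[0,x_0]$ and strictly decreasing on $[x_0,1]$ with $x_0=a/(a+1)$. Let $r_a$ be the restriction of $\phi_a$ to $[x_0,1]$, and define $g_a(x)=r_a^{-1}(\phi_a(x))$ for $0\le x\le 1$. *)

From Stdlib Require Import Reals ClassicalEpsilon.
From Coquelicot Require Import Coquelicot.
Open Scope R_scope.

(* real power x^y for x >= 0, with the convention 0^y = 0 (y > 0 in all uses) *)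
Definition rpow (x y : R) : R := if Rle_dec x 0 then 0 else Rpower x y.

Definition Gamma (s : R) : R :=
  RInt_gen (fun t => rpow t (s - 1) * exp (- t)) (at_right 0) (Rbar_locally p_infty).

Definition cot (x : R) : R := cos x / sin x.

Definition phi (a x : R) : R := rpow x a - rpow x (a + 1).

Definition x0 (a : R) : R := a / (a + 1).

(* r_a^{-1}(v): the (unique) y in [x_0, 1] with phi_a y = v *)
Definition r_inv (a v : R) : R :=
  epsilon (inhabits 0) (fun y => x0 a <= y <= 1 /\ phi a y = v).

Definition g (a x : R) : R := r_inv a (phi a x).

Definition term (a : R) (n : nat) : R :=
  let an := a * INR n in
  Gamma (an + 1) * Gamma (an + INR n - 1) / (Gamma (an + INR n + 2) * Gamma an).

From Stdlib Require Import Reals Lra Lia Psatz ClassicalEpsilon ZArith.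
From Coquelicot Require Import Coquelicot.
Open Scope R_scope.

(* By Gamma (s+1) = s Gamma (s) (proved from Euler's integral), the n-th summand
   of the theorem is (a/(a+1)) / ((a+1)^2 n^2 - 1), a multiple of the n-th term of Euler's
   partial-fraction expansion  pi cot (pi z) - 1/z = sum_(n>=1) 2z / (z^2 - n^2)  at
   z = 1/(a+1).  That expansion is proved by Herglotz's trick: the difference D of both
   sides extends continuously to [0,1] with D 0 = 0 and satisfies
   D (x/2) + D ((x+1)/2) = 2 D x, which forces D = 0.  This gives the closed form.

   On [x0, 1], g_a is the identity.  On [0, x0] we parametrize the level sets
   of phi_a: with p = u^a, the points X = u Y and Y = (1-p)/(1-up) satisfy
   phi_a X = phi_a Y, X in (0,x0), Y in (x0,1), so g_a X = Y, and X runs over (0,x0) as u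
   runs over (0,1).  The substitution x = X(u) turns int_0^x0 g_a into int_0^1 Y X' du,
   which equals explicit boundary terms minus a/(2(a+1)) times int_0^1 w, where
   w u = u^(a-1) (1 - u^2)/(1 - u^(a+1)).  Expanding 1/(1 - u^(a+1)) geometrically,
   int_0^1 w = sum_k (1/c_k - 1/(c_k + 2)) with c_k = a + (a+1) k, again a multiple of
   the series of the theorem.  All integrals over (0,1) are taken as limits over
   [d, 1-d], d -> 0+. *)

Lemma Rabs_lt_of_ball (y eps z : R) : ball y eps z -> Rabs (z - y) < eps.
Proof. unfold ball; simpl; unfold AbsRing_ball, abs, minus, plus, opp; simpl. tauto. Qed.

Lemma ball_of_Rabs_lt (y eps z : R) : Rabs (z - y) < eps -> ball y eps z.
Proof. unfold ball; simpl; unfold AbsRing_ball, abs, minus, plus, opp; simpl. tauto. Qed.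

Lemma locally_pos (t : R) : 0 < t -> locally t (fun y => 0 < y).
Proof.
  intros Ht. exists (mkposreal t Ht). intros y Hy. apply Rabs_lt_of_ball, Rabs_def2 in Hy. simpl in Hy. lra.
Qed.

Lemma nat_above (x : R) : exists n : nat, x <= INR n.
Proof.
  destruct (archimed x) as [Hu _].
  exists (Z.to_nat (Z.abs (up x))).
  rewrite INR_IZR_INZ, Z2Nat.id by apply Z.abs_nonneg.
  rewrite abs_IZR. pose proof (Rle_abs (IZR (up x))). lra.
Qed.

Lemma between_pos (a b x : R) : 0 < a -> 0 < b -> Rmin a b <= x <= Rmax a b -> 0 < x.
Proof. intros Ha Hb [H1 _]. unfold Rmin in H1. destruct (Rle_dec a b); lra. Qed.

Lemma between_sym_01 (d u : R) : 0 < d < 1 / 2 ->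
  Rmin d (1 - d) <= u <= Rmax d (1 - d) -> 0 < u < 1.
Proof. intros Hd Hu. rewrite Rmin_left, Rmax_right in Hu by lra. lra. Qed.

Lemma FTC (F f : R -> R) (a b : R) :
  (forall x, Rmin a b <= x <= Rmax a b -> is_derive F x (f x)) ->
  (forall x, Rmin a b <= x <= Rmax a b -> continuous f x) ->
  is_RInt f a b (F b - F a).
Proof. intros H1 H2. exact (is_RInt_derive (V:=R_CompleteNormedModule) F f a b H1 H2). Qed.

Lemma continuous_of_derive (f : R -> R) (x : R) : ex_derive f x -> continuous f x.
Proof. exact (ex_derive_continuous (K:=R_AbsRing) (V:=R_NormedModule) f x). Qed.

Lemma ex_RInt_pos (f : R -> R) : (forall t, 0 < t -> continuous f t) ->
  forall a b, 0 < a -> 0 < b -> ex_RInt f a b.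
Proof.
  intros Hc a b Ha Hb. apply (ex_RInt_continuous (V := R_CompleteNormedModule)).
  intros z Hz. apply Hc. exact (between_pos a b z Ha Hb Hz).
Qed.

Lemma RInt_mono_nonneg (f : R -> R) : (forall t, 0 < t -> continuous f t) ->
  (forall t, 0 < t -> 0 <= f t) ->
  forall a c d b, 0 < a -> a <= c -> c <= d -> d <= b -> RInt f c d <= RInt f a b.
Proof.
  intros Hc Hp a c d b Ha H1 H2 H3.
  assert (Hex : forall s t, 0 < s -> 0 < t -> ex_RInt f s t) by (apply ex_RInt_pos; exact Hc).
  assert (E1 := RInt_Chasles f a c b (Hex a c ltac:(lra) ltac:(lra)) (Hex c b ltac:(lra) ltac:(lra))).
  assert (E2 := RInt_Chasles f c d b (Hex c d ltac:(lra) ltac:(lra)) (Hex d b ltac:(lra) ltac:(lra))).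
  unfold plus in E1, E2; simpl in E1, E2.
  assert (0 <= RInt f a c) by (apply RInt_ge_0; [lra | apply Hex; lra | intros; apply Hp; lra]).
  assert (0 <= RInt f d b) by (apply RInt_ge_0; [lra | apply Hex; lra | intros; apply Hp; lra]).
  lra.
Qed.

Lemma improper_integral_of_bounded (f : R -> R) (B : R) :
  (forall t, 0 < t -> continuous f t) -> (forall t, 0 < t -> 0 <= f t) ->
  (forall e M, 0 < e -> e <= M -> RInt f e M <= B) ->
  exists L, is_RInt_gen f (at_right 0) (Rbar_locally p_infty) L /\
     (forall e M, 0 < e -> e <= M -> RInt f e M <= L).
Proof.
  intros Hc Hp HB.
  set (E := fun x => exists e M, 0 < e /\ e <= M /\ x = RInt f e M).
  destruct (completeness E) as [L [HL1 HL2]].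
  { exists B. intros x (e & M & He & HeM & ->). auto. }
  { exists (RInt f 1 1). exists 1, 1. repeat split; lra. }
  assert (Hup : forall e M, 0 < e -> e <= M -> RInt f e M <= L).
  { intros e M He HeM. apply HL1. exists e, M. auto. }
  exists L. split; [| exact Hup].
  intros P [eps HP].
  assert (Hex : exists e0 M0, 0 < e0 /\ e0 <= M0 /\ L - eps < RInt f e0 M0).
  { apply Classical_Prop.NNPP. intros Hn.
    assert (L <= L - eps).
    { apply HL2. intros x (e & M & He & HeM & ->).
      apply Rnot_lt_le. intros Hlt. apply Hn. exists e, M. auto. }
    destruct eps; simpl in *; lra. }
  destruct Hex as (e0 & M0 & He0 & HeM0 & Hlt).
  apply Filter_prod with (fun x => 0 < x < e0) (fun y => M0 < y).
  - exists (mkposreal e0 He0). intros y Hy Hy0.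
    apply Rabs_lt_of_ball, Rabs_def2 in Hy. simpl in Hy. lra.
  - exists M0. auto.
  - intros x y [Hx1 Hx2] Hy. simpl. exists (RInt f x y). split.
    + apply (RInt_correct (V:=R_CompleteNormedModule)). apply ex_RInt_pos; auto; lra.
    + apply HP, ball_of_Rabs_lt.
      assert (RInt f e0 M0 <= RInt f x y) by (apply RInt_mono_nonneg; auto; lra).
      assert (RInt f x y <= L) by (apply Hup; lra).
      apply Rabs_def1; destruct eps; simpl in *; lra.
Qed.

Lemma eventually_between_pos (P : R -> Prop) : (forall x, 0 < x -> P x) ->
  filter_prod (at_right 0) (Rbar_locally p_infty)
    (fun ab => forall x, Rmin (fst ab) (snd ab) <= x <= Rmax (fst ab) (snd ab) -> P x).
Proof.
  intros HP. apply Filter_prod with (fun x => 0 < x) (fun y => 0 < y).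
  - exists (mkposreal 1 Rlt_0_1). intros y _ Hy. exact Hy.
  - exists 0. auto.
  - intros x y Hx Hy z Hz. apply HP. exact (between_pos x y z Hx Hy Hz).
Qed.

Section FilterLimits.
Context {T : Type} {F : (T -> Prop) -> Prop} {FF : Filter F}.

Lemma lim_plus (f h : T -> R) (lf lh : R) :
  filterlim f F (locally lf) -> filterlim h F (locally lh) ->
  filterlim (fun x => f x + h x) F (locally (lf + lh)).
Proof.
  intros H1 H2. eapply filterlim_comp_2; [exact H1 | exact H2 |].
  apply (filterlim_Rbar_plus lf lh (lf + lh)). reflexivity.
Qed.

Lemma lim_mult (f h : T -> R) (lf lh : R) :
  filterlim f F (locally lf) -> filterlim h F (locally lh) ->
  filterlim (fun x => f x * h x) F (locally (lf * lh)).
Proof.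
  intros H1 H2. eapply filterlim_comp_2; [exact H1 | exact H2 |].
  apply (filterlim_Rbar_mult lf lh (lf * lh)). reflexivity.
Qed.

Lemma lim_const (c : R) : filterlim (fun _ => c) F (locally c).
Proof. apply filterlim_const. Qed.

Lemma lim_minus (f h : T -> R) (lf lh : R) :
  filterlim f F (locally lf) -> filterlim h F (locally lh) ->
  filterlim (fun x => f x - h x) F (locally (lf - lh)).
Proof.
  intros H1 H2. apply filterlim_ext with (fun x => f x + (-1) * h x). intros; ring.
  replace (lf - lh) with (lf + (-1) * lh) by ring.
  apply lim_plus; [exact H1 |]. apply lim_mult; [apply lim_const | exact H2].
Qed.

Lemma lim_div (f h : T -> R) (lf lh : R) : lh <> 0 ->
  filterlim f F (locally lf) -> filterlim h F (locally lh) ->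
  filterlim (fun x => f x / h x) F (locally (lf / lh)).
Proof.
  intros Hl H1 H2. apply lim_mult; [exact H1 |].
  eapply filterlim_comp; [exact H2 |].
  apply (filterlim_Rbar_inv lh). intros E. apply Hl. injection E; auto.
Qed.

Lemma lim_val (f : T -> R) (l l' : R) :
  l = l' -> filterlim f F (locally l) -> filterlim f F (locally l').
Proof. intros <-; auto. Qed.

Lemma lim_ext (f h : T -> R) (l : R) :
  F (fun x => f x = h x) -> filterlim f F (locally l) -> filterlim h F (locally l).
Proof. intros E H. eapply filterlim_ext_loc; eauto. Qed.

Lemma lim_squeeze0 (f h : T -> R) :
  F (fun x => Rabs (f x) <= h x) -> filterlim h F (locally 0) -> filterlim f F (locally 0).
Proof.
  intros Hb Hh. apply filterlim_locally. intros eps.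
  assert (H := proj1 (filterlim_locally h 0) Hh eps).
  eapply filter_imp; [| apply filter_and; [exact Hb | exact H]].
  intros x [H1 H2]. apply Rabs_lt_of_ball in H2. apply ball_of_Rabs_lt.
  rewrite Rminus_0_r in *. apply Rabs_def2 in H2. lra.
Qed.

End FilterLimits.

Lemma at_right0_of (P : R -> Prop) (e : R) : 0 < e -> (forall d, 0 < d < e -> P d) ->
  at_right 0 P.
Proof.
  intros He HP. exists (mkposreal e He). intros y Hy Hy0. apply Rabs_lt_of_ball in Hy. simpl in Hy.
  rewrite Rminus_0_r in Hy. apply Rabs_def2 in Hy. apply HP. lra.
Qed.

Lemma lim_id0 : filterlim (fun d : R => d) (at_right 0) (locally 0).
Proof. eapply filterlim_filter_le_1. apply filter_le_within. apply filterlim_id. Qed.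

Lemma lim_at_1_minus (h : R -> R) (l : R) : continuous h 1 -> h 1 = l ->
  filterlim (fun d => h (1 - d)) (at_right 0) (locally l).
Proof.
  intros Hc <-. eapply filterlim_comp with (G := locally 1); [| exact Hc].
  replace 1 with (1 - 0) at 2 by ring. apply lim_minus; [apply lim_const | apply lim_id0].
Qed.

Lemma lim_left_quotient_1 (f : R -> R) (l : R) : derivable_pt_lim f 1 l ->
  filterlim (fun d => (f 1 - f (1 - d)) / d) (at_right 0) (locally l).
Proof.
  intros Hd. apply filterlim_locally. intros eps.
  destruct (Hd eps (cond_pos eps)) as [del Hdel].
  apply (at_right0_of _ del (cond_pos del)). intros d Hd0.
  apply ball_of_Rabs_lt. specialize (Hdel (- d)).
  replace ((f 1 - f (1 - d)) / d) with ((f (1 + - d) - f 1) / - d).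
  - apply Hdel; [lra |]. rewrite Rabs_Ropp, Rabs_pos_eq; lra.
  - replace (1 + - d) with (1 - d) by ring. field. lra.
Qed.

Lemma zero_of_close_zeros (G : R -> R) (x0 : R) : continuous G x0 ->
  (forall d : posreal, exists y, Rabs (y - x0) < d /\ G y = 0) -> G x0 = 0.
Proof.
  intros Hc Hy. destruct (Req_EM_T (G x0) 0) as [E | Hn]; auto. exfalso.
  assert (Hp : 0 < Rabs (G x0)) by (apply Rabs_pos_lt; auto).
  destruct (proj1 (filterlim_locally (F := locally x0) G (G x0)) Hc (mkposreal _ Hp)) as [d Hd].
  destruct (Hy d) as [y [Hy1 Hy2]].
  specialize (Hd y (ball_of_Rabs_lt _ _ _ Hy1)). apply Rabs_lt_of_ball in Hd.
  rewrite Hy2, Rminus_0_l, Rabs_Ropp in Hd. simpl in Hd. lra.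
Qed.

Lemma rpow_pos (t y : R) : 0 < t -> rpow t y = Rpower t y.
Proof. intros Ht. unfold rpow. destruct (Rle_dec t 0); [lra | reflexivity]. Qed.

Lemma Rpower_pos (t y : R) : 0 < Rpower t y.
Proof. apply exp_pos. Qed.

Lemma Rpower_1_base (y : R) : Rpower 1 y = 1.
Proof. unfold Rpower. rewrite ln_1, Rmult_0_r. apply exp_0. Qed.

Lemma Rpower_S (u c : R) : 0 < u -> Rpower u (c + 1) = Rpower u c * u.
Proof. intros Hu. rewrite Rpower_plus, Rpower_1 by exact Hu. reflexivity. Qed.

Lemma Rpower_lt_1 (c u : R) : 0 < c -> 0 < u < 1 -> Rpower u c < 1.
Proof.
  intros Hc Hu. unfold Rpower. rewrite <- exp_0. apply exp_increasing.
  assert (ln u < 0) by (rewrite <- ln_1; apply ln_increasing; lra). nra.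
Qed.

Lemma Rpower_small (c eps y : R) : 0 < c -> 0 < eps -> 0 < y < Rpower eps (/ c) ->
  Rpower y c < eps.
Proof.
  intros Hc He Hy.
  assert (E : Rpower (Rpower eps (/ c)) c = eps).
  { rewrite Rpower_mult. replace (/ c * c) with 1 by (field; lra). apply Rpower_1, He. }
  rewrite <- E. apply Rlt_Rpower_l; lra.
Qed.

Lemma lim_Rpower_0 (c : R) : 0 < c -> filterlim (fun d => Rpower d c) (at_right 0) (locally 0).
Proof.
  intros Hc. apply filterlim_locally. intros eps.
  apply (at_right0_of _ (Rpower eps (/ c))); [apply Rpower_pos |]. intros d Hd.
  apply ball_of_Rabs_lt. rewrite Rminus_0_r, Rabs_pos_eq by apply Rlt_le, Rpower_pos.
  apply Rpower_small; [exact Hc | apply cond_pos | exact Hd].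
Qed.

Lemma is_derive_Rpower (y t : R) : 0 < t ->
  is_derive (fun x => Rpower x y) t (y * Rpower t (y - 1)).
Proof. intros Ht. apply is_derive_Reals, derivable_pt_lim_power, Ht. Qed.

Lemma continuous_Rpower (y t : R) : 0 < t -> continuous (fun x => Rpower x y) t.
Proof. intros Ht. apply continuous_of_derive. eexists. apply is_derive_Rpower, Ht. Qed.

Lemma pow_le_exp (m : nat) (t : R) : 0 <= t ->
  t ^ m <= INR (Factorial.fact m) * 2 ^ m * exp (t / 2).
Proof.
  intros Ht.
  assert (Hf : 0 < INR (Factorial.fact m)) by apply lt_0_INR, Factorial.lt_O_fact.
  assert (Hl : (t/2) ^ m / INR (Factorial.fact m) <= exp (t/2)).
  { eapply Rle_trans; [| exact (exp_ge_taylor (t/2) m ltac:(lra))].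
    destruct m as [| k]; [simpl; lra |].
    set (f := fun k0 : nat => (t / 2) ^ k0 / INR (Factorial.fact k0)).
    change (sum_f_R0 f (S k)) with (sum_f_R0 f k + f (S k)).
    assert (0 <= sum_f_R0 f k).
    { apply cond_pos_sum. intros n. unfold f, Rdiv. apply Rmult_le_pos; [apply pow_le; lra |].
      apply Rlt_le, Rinv_0_lt_compat, lt_0_INR, Factorial.lt_O_fact. }
    unfold f at 2. lra. }
  unfold Rdiv in Hl. rewrite Rpow_mult_distr in Hl.
  assert (Hp : 0 < 2 ^ m) by (apply pow_lt; lra).
  replace (t ^ m) with (INR (Factorial.fact m) * 2 ^ m * (t ^ m * (/ 2) ^ m * / INR (Factorial.fact m)))
    by (rewrite pow_inv; field; lra).
  apply Rmult_le_compat_l; [nra | exact Hl].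
Qed.

Lemma Rpower_le_exp (y : R) :
  exists C, 0 < C /\ forall t, 1 <= t -> Rpower t y <= C * exp (t / 2).
Proof.
  destruct (nat_above y) as [m Hm].
  exists (INR (Factorial.fact m) * 2 ^ m). split.
  { apply Rmult_lt_0_compat; [apply lt_0_INR, Factorial.lt_O_fact | apply pow_lt; lra]. }
  intros t Ht. eapply Rle_trans; [apply Rle_Rpower with (m := INR m); lra |].
  rewrite Rpower_pow by lra. apply pow_le_exp. lra.
Qed.

Lemma lim_Rpower_exp_0 (s : R) : 0 < s ->
  filterlim (fun t => Rpower t s * exp (- t)) (at_right 0) (locally 0).
Proof.
  intros Hs.
  assert (Hexp : filterlim (fun t => exp (- t)) (at_right 0) (locally 1)).
  { apply (lim_val _ (exp (- 0))); [rewrite Ropp_0; apply exp_0 |].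
    eapply filterlim_filter_le_1; [apply filter_le_within |].
    apply (continuous_of_derive (fun t => exp (- t)) 0). auto_derive. auto. }
  apply (lim_val _ (0 * 1)); [ring |]. apply lim_mult; [apply lim_Rpower_0, Hs | exact Hexp].
Qed.

Lemma lim_Rpower_exp_inf (s : R) :
  filterlim (fun t => Rpower t s * exp (- t)) (Rbar_locally p_infty) (locally 0).
Proof.
  destruct (Rpower_le_exp s) as [C [HC HCb]].
  apply filterlim_locally. intros eps.
  exists (Rmax 1 (- 2 * ln (eps / C))). intros y Hy.
  assert (Hy1 : 1 < y) by (eapply Rle_lt_trans; [apply Rmax_l | exact Hy]).
  assert (Hy2 : - 2 * ln (eps / C) < y) by (eapply Rle_lt_trans; [apply Rmax_r | exact Hy]).
  assert (Hep : 0 < eps / C) by (apply Rdiv_lt_0_compat; [apply cond_pos | exact HC]).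
  apply ball_of_Rabs_lt. rewrite Rminus_0_r.
  rewrite Rabs_pos_eq by (apply Rmult_le_pos; apply Rlt_le; [apply Rpower_pos | apply exp_pos]).
  eapply Rle_lt_trans; [apply Rmult_le_compat_r; [apply Rlt_le, exp_pos | apply HCb; lra] |].
  rewrite Rmult_assoc, <- exp_plus.
  assert (exp (y / 2 + - y) < eps / C).
  { rewrite <- (exp_ln (eps / C)) by exact Hep. apply exp_increasing. lra. }
  replace (pos eps) with (C * (eps / C)) by (field; lra).
  apply Rmult_lt_compat_l; assumption.
Qed.

Definition gamma_integrand (s : R) : R -> R := fun t => rpow t (s - 1) * exp (- t).

Lemma gamma_integrand_continuous (s t : R) : 0 < t -> continuous (gamma_integrand s) t.
Proof.
  intros Ht. apply continuous_ext_loc with (fun x => Rpower x (s - 1) * exp (- x)).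
  - apply filter_imp with (2 := locally_pos t Ht). intros y Hy.
    unfold gamma_integrand. rewrite rpow_pos by exact Hy. reflexivity.
  - apply (continuous_mult (K := R_AbsRing)); [apply continuous_Rpower, Ht |].
    apply continuous_of_derive. auto_derive. auto.
Qed.

Lemma gamma_integrand_pos (s t : R) : 0 < t -> 0 < gamma_integrand s t.
Proof.
  intros Ht. unfold gamma_integrand. rewrite rpow_pos by exact Ht.
  apply Rmult_lt_0_compat; [apply Rpower_pos | apply exp_pos].
Qed.

(* Near 0 the integrand is at most t^(s-1), whose integral over [e,1] is at most 1/s. *)
Lemma gamma_integral_near_0 (s e : R) : 0 < s -> 0 < e <= 1 ->
  RInt (gamma_integrand s) e 1 <= 1 / s.
Proof.
  intros Hs He.
  assert (Hi : is_RInt (fun x => Rpower x (s - 1)) e 1 (/ s * Rpower 1 s - / s * Rpower e s)).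
  { apply (FTC (fun x => / s * Rpower x s)); intros x Hx;
      assert (0 < x) by (apply (between_pos e 1); lra).
    - replace (Rpower x (s - 1)) with (/ s * (s * Rpower x (s - 1))) by (field; lra).
      apply is_derive_scal, is_derive_Rpower. assumption.
    - apply continuous_Rpower. assumption. }
  eapply Rle_trans.
  - apply RInt_le with (g := fun x => Rpower x (s - 1)); [lra | | eexists; exact Hi |].
    + apply ex_RInt_pos; try lra. intros; apply gamma_integrand_continuous; assumption.
    + intros x Hx. unfold gamma_integrand. rewrite rpow_pos by lra.
      assert (exp (- x) <= 1) by (rewrite <- exp_0; apply Rlt_le, exp_increasing; lra).
      pose proof (Rpower_pos x (s - 1)). nra.
  - rewrite (is_RInt_unique _ _ _ _ Hi), Rpower_1_base.
    pose proof (Rpower_pos e s). assert (0 < / s) by (apply Rinv_0_lt_compat; lra).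
    unfold Rdiv. nra.
Qed.

(* Near +oo the integrand is at most C e^(-t/2), whose integral over [1,M] is at most 2C. *)
Lemma gamma_integral_near_inf (s : R) :
  exists B, forall M, 1 <= M -> RInt (gamma_integrand s) 1 M <= B.
Proof.
  destruct (Rpower_le_exp (s - 1)) as [C [HC HCb]].
  exists (2 * C). intros M HM.
  assert (Hi : is_RInt (fun x => C * exp ((-1/2) * x)) 1 M
      ((-2 * C) * exp ((-1/2) * M) - (-2 * C) * exp ((-1/2) * 1))).
  { apply (FTC (fun x => (-2 * C) * exp ((-1/2) * x))); intros x Hx.
    - auto_derive; auto. field.
    - apply continuous_of_derive. auto_derive. auto. }
  eapply Rle_trans.
  - apply RInt_le with (g := fun x => C * exp ((-1/2) * x)); [lra | | eexists; exact Hi |].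
    + apply ex_RInt_pos; try lra. intros; apply gamma_integrand_continuous; assumption.
    + intros x Hx. unfold gamma_integrand. rewrite rpow_pos by lra.
      replace (exp ((-1/2) * x)) with (exp (x / 2) * exp (- x))
        by (rewrite <- exp_plus; f_equal; field).
      rewrite <- Rmult_assoc. apply Rmult_le_compat_r; [apply Rlt_le, exp_pos |]. apply HCb. lra.
  - rewrite (is_RInt_unique _ _ _ _ Hi).
    pose proof (exp_pos ((-1/2) * M)).
    assert (Hle : exp ((-1/2) * 1) <= exp 0) by (apply Rlt_le, exp_increasing; lra).
    rewrite exp_0 in Hle. nra.
Qed.

Lemma gamma_integral_bounded (s : R) : 0 < s ->
  exists B, forall e M, 0 < e -> e <= M -> RInt (gamma_integrand s) e M <= B.
Proof.
  intros Hs. destruct (gamma_integral_near_inf s) as [B HB].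
  exists (1 / s + B). intros e M He HeM.
  set (e' := Rmin e 1). set (M' := Rmax M 1).
  assert (He' : 0 < e' /\ e' <= e /\ e' <= 1) by (unfold e', Rmin; destruct (Rle_dec e 1); lra).
  assert (HM' : M <= M' /\ 1 <= M') by (unfold M', Rmax; destruct (Rle_dec M 1); lra).
  assert (Hc := gamma_integrand_continuous s).
  assert (H1 : RInt (gamma_integrand s) e M <= RInt (gamma_integrand s) e' M').
  { apply RInt_mono_nonneg; auto; try lra. intros; apply Rlt_le, gamma_integrand_pos; auto. }
  assert (E := RInt_Chasles (gamma_integrand s) e' 1 M'
                 (ex_RInt_pos _ Hc e' 1 ltac:(lra) ltac:(lra))
                 (ex_RInt_pos _ Hc 1 M' ltac:(lra) ltac:(lra))).
  unfold plus in E; simpl in E.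
  pose proof (gamma_integral_near_0 s e' Hs ltac:(lra)). pose proof (HB M' ltac:(lra)).
  lra.
Qed.

Lemma Gamma_spec (s : R) : 0 < s ->
  is_RInt_gen (gamma_integrand s) (at_right 0) (Rbar_locally p_infty) (Gamma s) /\ 0 < Gamma s.
Proof.
  intros Hs. destruct (gamma_integral_bounded s Hs) as [B HB].
  destruct (improper_integral_of_bounded (gamma_integrand s) B (gamma_integrand_continuous s)
              (fun t Ht => Rlt_le _ _ (gamma_integrand_pos s t Ht)) HB) as [L [HL Hup]].
  replace (Gamma s) with L.
  2:{ symmetry. unfold Gamma. fold (gamma_integrand s).
      apply (is_RInt_gen_unique (V:=R_CompleteNormedModule)); exact HL. }
  split; [exact HL |].
  eapply Rlt_le_trans; [| apply (Hup 1 2); lra].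
  apply RInt_gt_0; [lra | intros; apply gamma_integrand_pos; lra |].
  intros; apply gamma_integrand_continuous; lra.
Qed.

(* Functional equation Gamma (s + 1) = s Gamma s: integrate (t^s e^(-t))' over (0, +oo). *)
Lemma Gamma_rec (s : R) : 0 < s -> Gamma (s + 1) = s * Gamma s.
Proof.
  intros Hs. destruct (Gamma_spec s Hs) as [HG _].
  set (F := fun t => Rpower t s * exp (- t)).
  set (dF := fun t => s * gamma_integrand s t - gamma_integrand (s + 1) t).
  assert (HdF : forall x, 0 < x -> is_derive F x (dF x)).
  { intros x Hx. unfold F, dF, gamma_integrand. rewrite !rpow_pos by exact Hx.
    replace (s + 1 - 1) with s by ring.
    replace (s * (Rpower x (s - 1) * exp (- x)) - Rpower x s * exp (- x))
      with (s * Rpower x (s - 1) * exp (- x) + Rpower x s * (- exp (- x))) by ring.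
    apply (is_derive_mult (K:=R_AbsRing) (fun t => Rpower t s) (fun t => exp (- t)));
      [apply is_derive_Rpower, Hx | auto_derive; auto; ring | intros; apply Rmult_comm]. }
  assert (HD : is_RInt_gen (Derive F) (at_right 0) (Rbar_locally p_infty) (0 - 0)).
  { apply is_RInt_gen_Derive.
    - apply eventually_between_pos. intros x Hx. eexists. apply HdF, Hx.
    - apply eventually_between_pos. intros x Hx.
      apply continuous_ext_loc with dF.
      + apply filter_imp with (2 := locally_pos x Hx). intros y Hy.
        symmetry. apply is_derive_unique, HdF, Hy.
      + apply (continuous_minus (V:=R_NormedModule));
          [apply (continuous_scal_r (V:=R_NormedModule) s) |];
          apply gamma_integrand_continuous, Hx.
    - apply lim_Rpower_exp_0, Hs.
    - apply lim_Rpower_exp_inf. }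
  assert (H := is_RInt_gen_minus _ _ _ _ (is_RInt_gen_scal _ s _ HG) HD).
  unfold Gamma at 1. fold (gamma_integrand (s + 1)).
  apply (is_RInt_gen_unique (V:=R_CompleteNormedModule)).
  replace (s * Gamma s) with (minus (scal s (Gamma s)) (0 - 0))
    by (unfold minus, plus, opp, scal; simpl; unfold mult; simpl; ring).
  eapply is_RInt_gen_ext; [| exact H].
  eapply filter_imp; [| apply (eventually_between_pos (fun x => Derive F x = dF x))].
  - intros ab Hab x Hx. rewrite Hab by lra.
    unfold dF, minus, plus, opp, scal; simpl. unfold mult; simpl. ring.
  - intros x Hx. apply is_derive_unique, HdF, Hx.
Qed.

Lemma term_closed_form (a : R) (n : nat) : 0 < a ->
  term a (S n) = a / (a + 1) / ((a + 1) ^ 2 * INR (S n) ^ 2 - 1).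
Proof.
  intros Ha. unfold term.
  set (m := INR (S n)).
  assert (Hm : 1 <= m) by (unfold m; rewrite S_INR; pose proof (pos_INR n); lra).
  set (s := a * m + m - 1).
  assert (Hs : 0 < s) by (unfold s; nra).
  assert (Han : 0 < a * m) by nra.
  rewrite (Gamma_rec (a * m) Han).
  replace (a * m + m + 2) with (((s + 1) + 1) + 1) by (unfold s; ring).
  rewrite (Gamma_rec (s + 1 + 1)), (Gamma_rec (s + 1)), (Gamma_rec s) by lra.
  replace (a * m + m - 1) with s by reflexivity.
  destruct (Gamma_spec s Hs) as [_ G1]. destruct (Gamma_spec (a * m) Han) as [_ G2].
  replace ((a + 1) ^ 2 * m ^ 2 - 1) with (s * (s + 2)) by (unfold s; ring).
  replace (a * m) with (a / (a + 1) * (s + 1)) at 1 by (unfold s; field; lra).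
  field. repeat split; lra.
Qed.

(* The partial-fraction terms of pi cot (pi x) - 1/x, indexed from n = 0 (pole at n + 1). *)
Definition cot_pf (x : R) (n : nat) : R := 2 * x / (x ^ 2 - (INR n + 1) ^ 2).

Definition tel (n : nat) : R := / ((INR n + 1) * (INR n + 2)).

Lemma tel_series : is_series tel 1.
Proof.
  unfold is_series. change (is_lim_seq (sum_n tel) 1).
  apply is_lim_seq_ext with (fun N => 1 - / (INR N + 2)).
  { intros N. rewrite sum_n_Reals. induction N as [| N IH].
    - simpl. unfold tel. simpl. field.
    - simpl sum_f_R0. rewrite <- IH. unfold tel. rewrite S_INR.
      pose proof (pos_INR N). field. lra. }
  replace (Finite 1) with (Rbar_minus 1 0) by (simpl; f_equal; ring).
  apply is_lim_seq_minus'; [apply is_lim_seq_const |].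
  replace (Finite 0) with (Rbar_inv p_infty) by reflexivity.
  apply is_lim_seq_inv; [| discriminate].
  eapply is_lim_seq_plus; [apply is_lim_seq_INR | apply is_lim_seq_const | reflexivity].
Qed.

Lemma ex_series_tel_scal (c : R) : ex_series (fun n => c * tel n).
Proof. exists (c * 1). exact (is_series_scal_l c _ _ tel_series). Qed.

Lemma Series_tel_scal (c : R) : Series (fun n => c * tel n) = c.
Proof. rewrite Series_scal_l, (is_series_unique _ _ tel_series). ring. Qed.

Lemma div_le (a b c d : R) : 0 < b -> 0 < d -> a * d <= c * b -> a / b <= c / d.
Proof.
  intros Hb Hd H. unfold Rdiv. apply Rmult_le_reg_r with (b * d); [nra |].
  replace (a * / b * (b * d)) with (a * d) by (field; lra).
  replace (c * / d * (b * d)) with (c * b) by (field; lra). exact H.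
Qed.

(* The terms with index >= 1: these have no pole for |x| <= 3/2. *)
Definition cot_tail (x : R) (n : nat) : R := 2 * x / (x ^ 2 - (INR n + 2) ^ 2).

Lemma cot_pf_S (x : R) (n : nat) : cot_pf x (S n) = cot_tail x n.
Proof. unfold cot_pf, cot_tail. rewrite S_INR. do 3 f_equal. ring. Qed.

Lemma cot_tail_bound (x : R) (n : nat) : Rabs x <= 3 / 2 -> Rabs (cot_tail x n) <= 8 * tel n.
Proof.
  intros Hx. unfold cot_tail, tel. set (m := INR n + 2).
  assert (Hm : 2 <= m) by (unfold m; pose proof (pos_INR n); lra).
  replace (INR n + 1) with (m - 1) by (unfold m; ring). fold m.
  assert (Hx2 : x ^ 2 <= 9 / 4) by (apply Rabs_le_between in Hx; nra).
  unfold Rdiv. rewrite Rabs_mult, Rabs_inv, (Rabs_left1 (x ^ 2 - m ^ 2)) by nra.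
  rewrite Rabs_mult, (Rabs_pos_eq 2) by lra.
  fold (Rdiv (2 * Rabs x) (- (x ^ 2 - m ^ 2))). fold (Rdiv 8 ((m - 1) * m)).
  apply div_le; try nra.
  assert (2 * Rabs x * ((m - 1) * m) <= 3 * ((m - 1) * m)) by (apply Rmult_le_compat_r; nra).
  nra.
Qed.

Lemma cot_tail_lipschitz (x y : R) (n : nat) : Rabs x <= 3 / 2 -> Rabs y <= 3 / 2 ->
  Rabs (cot_tail x n - cot_tail y n) <= 17 * tel n * Rabs (x - y).
Proof.
  intros Hx Hy. unfold cot_tail, tel. set (m := INR n + 2).
  assert (Hm : 2 <= m) by (unfold m; pose proof (pos_INR n); lra).
  replace (INR n + 1) with (m - 1) by (unfold m; ring). fold m.
  apply Rabs_le_between in Hx. apply Rabs_le_between in Hy.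
  assert (Hx2 : x ^ 2 <= 9 / 4) by nra. assert (Hy2 : y ^ 2 <= 9 / 4) by nra.
  assert (Dx : x ^ 2 - m ^ 2 < 0) by nra. assert (Dy : y ^ 2 - m ^ 2 < 0) by nra.
  replace (2 * x / (x ^ 2 - m ^ 2) - 2 * y / (y ^ 2 - m ^ 2)) with
    ((x - y) * (2 * (- (x * y) - m ^ 2) / ((x ^ 2 - m ^ 2) * (y ^ 2 - m ^ 2)))) by (field; lra).
  rewrite Rabs_mult, (Rmult_comm (17 * _)). apply Rmult_le_compat_l; [apply Rabs_pos |].
  unfold Rdiv. rewrite Rabs_mult, Rabs_inv.
  rewrite (Rabs_pos_eq ((x ^ 2 - m ^ 2) * (y ^ 2 - m ^ 2))) by nra.
  assert (Hnum : Rabs (2 * (- (x * y) - m ^ 2)) <= 2 * (9 / 4 + m ^ 2)).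
  { rewrite Rabs_mult, (Rabs_pos_eq 2) by lra. apply Rmult_le_compat_l; [lra |].
    apply Rabs_le. split; nra. }
  assert (Hq : 0 < m ^ 2 - 9 / 4) by nra.
  assert (Hden : (m ^ 2 - 9 / 4) ^ 2 <= (x ^ 2 - m ^ 2) * (y ^ 2 - m ^ 2)).
  { replace ((x ^ 2 - m ^ 2) * (y ^ 2 - m ^ 2)) with ((m ^ 2 - x ^ 2) * (m ^ 2 - y ^ 2)) by ring.
    simpl (_ ^ 2) at 1. rewrite Rmult_1_r. apply Rmult_le_compat; lra. }
  apply Rle_trans with (2 * (9 / 4 + m ^ 2) * / ((m ^ 2 - 9 / 4) ^ 2)).
  { apply Rmult_le_compat; [apply Rabs_pos | apply Rlt_le, Rinv_0_lt_compat; nra | exact Hnum |].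
    apply Rinv_le_contravar; [nra | exact Hden]. }
  fold (Rdiv (2 * (9 / 4 + m ^ 2)) ((m ^ 2 - 9 / 4) ^ 2)). fold (Rdiv 17 ((m - 1) * m)).
  apply div_le; try nra.
  set (t := m - 2). assert (Ht : 0 <= t) by (unfold t; lra). replace m with (t + 2) by (unfold t; ring).
  nra.
Qed.

Definition cot_tail_sum (x : R) : R := Series (cot_tail x).

Lemma ex_series_cot_tail (x : R) : Rabs x <= 3 / 2 -> ex_series (cot_tail x).
Proof.
  intros Hx. apply (ex_series_le (V:=R_CompleteNormedModule)) with (fun n => 8 * tel n).
  - intros n. apply cot_tail_bound, Hx.
  - apply ex_series_tel_scal.
Qed.

Lemma cot_tail_sum_lipschitz (x y : R) : Rabs x <= 3 / 2 -> Rabs y <= 3 / 2 ->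
  Rabs (cot_tail_sum x - cot_tail_sum y) <= 17 * Rabs (x - y).
Proof.
  intros Hx Hy. unfold cot_tail_sum. rewrite <- Series_minus by (apply ex_series_cot_tail; auto).
  assert (Hmaj : forall n, Rabs (cot_tail x n - cot_tail y n) <= 17 * Rabs (x - y) * tel n).
  { intros n. rewrite cot_tail_lipschitz by auto. lra. }
  assert (Hex : ex_series (fun n => Rabs (cot_tail x n - cot_tail y n))).
  { apply (ex_series_le (V:=R_CompleteNormedModule)) with (fun n => 17 * Rabs (x - y) * tel n).
    - intros n. change (norm (Rabs (cot_tail x n - cot_tail y n)))
        with (Rabs (Rabs (cot_tail x n - cot_tail y n))).
      rewrite Rabs_Rabsolu. apply Hmaj.
    - apply ex_series_tel_scal. }
  eapply Rle_trans; [apply Series_Rabs, Hex |].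
  rewrite <- (Series_tel_scal (17 * Rabs (x - y))).
  apply Series_le; [| apply ex_series_tel_scal].
  intros n. split; [apply Rabs_pos | apply Hmaj].
Qed.

Lemma cot_tail_sum_continuous (x : R) : Rabs x < 3 / 2 -> continuous cot_tail_sum x.
Proof.
  intros Hx. apply filterlim_locally. intros eps.
  assert (He : 0 < Rmin (eps / 18) (3 / 2 - Rabs x)) by (apply Rmin_pos; [destruct eps; simpl; lra | lra]).
  exists (mkposreal _ He). intros y Hy. apply Rabs_lt_of_ball in Hy. simpl in Hy.
  apply ball_of_Rabs_lt.
  pose proof (Rmin_l (eps / 18) (3 / 2 - Rabs x)). pose proof (Rmin_r (eps / 18) (3 / 2 - Rabs x)).
  assert (Hy2 : Rabs y <= 3 / 2).
  { replace y with (x + (y - x)) by ring. eapply Rle_trans; [apply Rabs_triang | lra]. }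
  eapply Rle_lt_trans; [apply cot_tail_sum_lipschitz; lra |]. destruct eps; simpl in *. lra.
Qed.

Lemma cot_tail_sum_0 : cot_tail_sum 0 = 0.
Proof.
  unfold cot_tail_sum. rewrite (Series_ext _ (fun n => 0 * cot_tail 0 n)).
  - rewrite Series_scal_l. ring.
  - intros n. unfold cot_tail, Rdiv. ring.
Qed.

Lemma ex_series_cot_pf (x : R) : Rabs x <= 3 / 2 -> ex_series (cot_pf x).
Proof.
  intros Hx. apply ex_series_incr_1. apply ex_series_ext with (cot_tail x).
  - intros n. symmetry. apply cot_pf_S.
  - apply ex_series_cot_tail, Hx.
Qed.

(* The candidate for pi cot (pi x): 1/x + sum_n cot_pf x n, with the poles at 0, 1, -1 explicit. *)
Definition cot_pf_sum (x : R) : R := 1 / x + 1 / (x - 1) + 1 / (x + 1) + cot_tail_sum x.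

Lemma Series_cot_pf (x : R) : 0 < x < 1 ->
  Series (cot_pf x) = 1 / (x - 1) + 1 / (x + 1) + cot_tail_sum x.
Proof.
  intros Hx. rewrite Series_incr_1 by (apply ex_series_cot_pf; apply Rabs_le; lra).
  unfold cot_tail_sum. rewrite (Series_ext _ (cot_tail x)) by apply cot_pf_S.
  unfold cot_pf. simpl INR. f_equal. field. split; nra.
Qed.

Lemma PI_gt_2 : 2 < PI.
Proof. pose proof PI2_1. lra. Qed.

Lemma sin_taylor_bounds (a : R) : 0 <= a -> a <= PI ->
  a - a ^ 3 / 6 <= sin a <= a - a ^ 3 / 6 + a ^ 5 / 120.
Proof.
  intros H1 H2. pose proof (sin_bound a 0 H1 H2) as H. unfold sin_approx, sin_term in H. simpl in H.
  match type of H with ?l <= _ <= ?r =>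
    replace (a - a ^ 3 / 6 + a ^ 5 / 120) with r by field; replace (a - a ^ 3 / 6) with l by field end.
  exact H.
Qed.

Lemma cos_taylor_bounds (a : R) : - PI / 2 <= a -> a <= PI / 2 ->
  1 - a ^ 2 / 2 <= cos a <= 1 - a ^ 2 / 2 + a ^ 4 / 24.
Proof.
  intros H1 H2. pose proof (cos_bound a 0 H1 H2) as H. unfold cos_approx, cos_term in H. simpl in H.
  match type of H with ?l <= _ <= ?r =>
    replace (1 - a ^ 2 / 2 + a ^ 4 / 24) with r by field; replace (1 - a ^ 2 / 2) with l by field end.
  exact H.
Qed.

Lemma sin_neq0 (y : R) : y <> 0 -> - PI < y < PI -> sin y <> 0.
Proof.
  intros H0 H. destruct (Rlt_le_dec 0 y).
  - assert (0 < sin y) by (apply sin_gt_0; lra). lra.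
  - assert (0 < sin (- y)) by (apply sin_gt_0; lra). rewrite sin_neg in H1. lra.
Qed.

Lemma cot_shift (t : R) : cot (t - PI) = cot t.
Proof.
  unfold cot. assert (Hc := neg_cos (t - PI)). assert (Hs := neg_sin (t - PI)).
  replace (t - PI + PI) with t in Hc, Hs by ring.
  replace (cos (t - PI)) with (- cos t) by lra. replace (sin (t - PI)) with (- sin t) by lra.
  unfold Rdiv. rewrite Rinv_opp. ring.
Qed.

Lemma abs_div_le_aux (n d k : R) : 0 < d -> Rabs n <= k * d -> Rabs (n / d) <= k.
Proof.
  intros Hd H. unfold Rdiv. rewrite Rabs_mult, Rabs_inv, (Rabs_pos_eq d) by lra.
  apply Rmult_le_reg_r with d; [lra |]. rewrite Rmult_assoc, Rinv_l by lra. lra.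
Qed.

Lemma cot_minus_inv_bound_pos (y : R) : 0 < y <= 1 -> Rabs (cot y - 1 / y) <= 2 * y.
Proof.
  intros Hy. pose proof PI_gt_2.
  destruct (sin_taylor_bounds y) as [Hs1 Hs2]; try lra.
  destruct (cos_taylor_bounds y) as [Hc1 Hc2]; try lra.
  assert (Hs : 5 * y / 6 <= sin y) by nra.
  unfold cot. replace (cos y / sin y - 1 / y) with ((y * cos y - sin y) / (y * sin y))
    by (field; split; lra).
  apply abs_div_le_aux; [nra |].
  assert (P3 : 0 < y ^ 3) by (apply pow_lt; lra).
  assert (H5 : y ^ 5 <= y ^ 3) by (replace (y ^ 5) with (y ^ 3 * y ^ 2) by ring; nra).
  assert (A1 : y * (1 - y ^ 2 / 2) <= y * cos y) by (apply Rmult_le_compat_l; lra).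
  assert (A2 : y * cos y <= y * (1 - y ^ 2 / 2 + y ^ 4 / 24)) by (apply Rmult_le_compat_l; lra).
  assert (B : y * (y * (5 * y / 6)) <= y * (y * sin y))
    by (apply Rmult_le_compat_l; [lra | apply Rmult_le_compat_l; lra]).
  apply Rabs_le. split.
  - assert (E1 : y * (1 - y ^ 2 / 2) - (y - y ^ 3 / 6 + y ^ 5 / 120) = - y ^ 3 / 3 - y ^ 5 / 120) by field.
    assert (E2 : y * (y * (5 * y / 6)) = 5 * y ^ 3 / 6) by field.
    nra.
  - assert (E1 : y * (1 - y ^ 2 / 2 + y ^ 4 / 24) - (y - y ^ 3 / 6) = - y ^ 3 / 3 + y ^ 5 / 24) by field.
    assert (E2 : y * (y * (5 * y / 6)) = 5 * y ^ 3 / 6) by field.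
    nra.
Qed.

Definition cot_reg (y : R) : R := if Req_EM_T y 0 then 0 else cot y - 1 / y.

Lemma cot_reg_0 : cot_reg 0 = 0.
Proof. unfold cot_reg. destruct (Req_EM_T 0 0); [reflexivity | congruence]. Qed.

Lemma cot_reg_bound (y : R) : Rabs y <= 1 -> Rabs (cot_reg y) <= 2 * Rabs y.
Proof.
  intros Hy. unfold cot_reg. destruct (Req_EM_T y 0) as [-> | Hn].
  - rewrite Rabs_R0. lra.
  - destruct (Rlt_le_dec 0 y) as [Hp | Hn'].
    + rewrite (Rabs_pos_eq y) in * by lra. apply cot_minus_inv_bound_pos. lra.
    + rewrite (Rabs_left y) in * by lra.
      assert (Hs : 0 < sin (- y)) by (apply sin_gt_0; pose proof PI_gt_2; lra).
      replace (cot y - 1 / y) with (- (cot (- y) - 1 / (- y))).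
      * rewrite Rabs_Ropp. apply cot_minus_inv_bound_pos. lra.
      * unfold cot. rewrite sin_neg, cos_neg in *. field. lra.
Qed.

(* Continuity at 0 comes from the bound, elsewhere from the formula. *)
Lemma cot_reg_continuous (y : R) : - PI < y < PI -> continuous cot_reg y.
Proof.
  intros Hy. destruct (Req_EM_T y 0) as [-> | H0].
  - apply filterlim_locally. intros eps.
    assert (He : 0 < Rmin 1 (eps / 2)) by (apply Rmin_pos; [lra | destruct eps; simpl; lra]).
    exists (mkposreal _ He). intros t Ht. apply Rabs_lt_of_ball in Ht. simpl in Ht.
    apply ball_of_Rabs_lt. rewrite cot_reg_0, Rminus_0_r in *.
    pose proof (Rmin_l 1 (eps / 2)). pose proof (Rmin_r 1 (eps / 2)).
    eapply Rle_lt_trans; [apply cot_reg_bound; lra | lra].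
  - apply continuous_ext_loc with (fun t => cos t / sin t - 1 / t).
    + assert (Hy0 : 0 < Rabs y) by (apply Rabs_pos_lt; auto).
      exists (mkposreal _ Hy0). intros t Ht. apply Rabs_lt_of_ball in Ht. simpl in Ht.
      unfold cot_reg. destruct (Req_EM_T t 0) as [-> |]; [| reflexivity].
      rewrite Rminus_0_l, Rabs_Ropp in Ht. lra.
    + apply continuous_of_derive. auto_derive. repeat split; auto. apply sin_neq0; auto.
Qed.

Lemma cot_reg_PI_continuous (u : R) : -1 < u < 1 -> continuous (fun x => PI * cot_reg (PI * x)) u.
Proof.
  intros Hu. apply (continuous_scal_r (V:=R_NormedModule) PI (fun x => cot_reg (PI * x))).
  apply (continuous_comp (fun x => PI * x) cot_reg).
  - apply continuous_of_derive. auto_derive. auto.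
  - apply cot_reg_continuous. pose proof PI_RGT_0. split; nra.
Qed.

(* The defect pi cot (pi x) - cot_pf_sum x, written with the poles cancelled:
   near 0 with cot_reg (pi x) (form [defect_left]), near 1 using cot (t - pi) = cot t
   (form [defect_right]).  [defect] glues the two forms at 1/2; it is continuous on [0,1]. *)
Definition defect_left (x : R) : R :=
  PI * cot_reg (PI * x) - 1 / (x - 1) - 1 / (x + 1) - cot_tail_sum x.
Definition defect_right (x : R) : R :=
  PI * cot_reg (PI * (x - 1)) - 1 / x - 1 / (x + 1) - cot_tail_sum x.
Definition defect (x : R) : R := if Rlt_dec x (1 / 2) then defect_left x else defect_right x.

Lemma defect_left_continuous (x : R) : -1 < x < 1 -> continuous defect_left x.
Proof.
  intros Hx. unfold defect_left.
  apply (continuous_minus (V:=R_NormedModule));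
    [apply (continuous_minus (V:=R_NormedModule)); [apply (continuous_minus (V:=R_NormedModule)) |] |].
  - apply cot_reg_PI_continuous, Hx.
  - apply continuous_of_derive. auto_derive. lra.
  - apply continuous_of_derive. auto_derive. lra.
  - apply cot_tail_sum_continuous, Rabs_def1; lra.
Qed.

Lemma defect_right_continuous (x : R) : 0 < x < 3 / 2 -> continuous defect_right x.
Proof.
  intros Hx. unfold defect_right.
  apply (continuous_minus (V:=R_NormedModule));
    [apply (continuous_minus (V:=R_NormedModule)); [apply (continuous_minus (V:=R_NormedModule)) |] |].
  - apply (continuous_comp (fun t => t - 1) (fun x => PI * cot_reg (PI * x))).
    + apply continuous_of_derive. auto_derive. auto.
    + apply cot_reg_PI_continuous. lra.
  - apply continuous_of_derive. auto_derive. lra.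
  - apply continuous_of_derive. auto_derive. lra.
  - apply cot_tail_sum_continuous, Rabs_def1; lra.
Qed.

Lemma defect_left_eq (x : R) : 0 < x < 1 -> defect_left x = PI * cot (PI * x) - cot_pf_sum x.
Proof.
  intros Hx. pose proof PI_RGT_0. unfold defect_left, cot_pf_sum, cot_reg.
  destruct (Req_EM_T (PI * x) 0) as [E | _]; [apply Rmult_integral in E; lra |].
  field. repeat split; lra.
Qed.

(* Same for the right form, using the periodicity of cot. *)
Lemma defect_right_eq (x : R) : 0 < x < 1 -> defect_right x = PI * cot (PI * x) - cot_pf_sum x.
Proof.
  intros Hx. pose proof PI_RGT_0. unfold defect_right, cot_pf_sum, cot_reg.
  destruct (Req_EM_T (PI * (x - 1)) 0) as [E | _]; [apply Rmult_integral in E; lra |].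
  replace (PI * (x - 1)) with (PI * x - PI) by ring. rewrite cot_shift.
  assert (PI * x - PI <> 0) by (intro; nra).
  field. repeat split; try lra; auto.
Qed.

Lemma defect_eq (x : R) : 0 < x < 1 -> defect x = PI * cot (PI * x) - cot_pf_sum x.
Proof.
  intros Hx. unfold defect. destruct (Rlt_dec x (1 / 2));
    [apply defect_left_eq | apply defect_right_eq]; exact Hx.
Qed.

Lemma defect_0 : defect 0 = 0.
Proof.
  unfold defect. destruct (Rlt_dec 0 (1 / 2)); [| lra].
  unfold defect_left. rewrite Rmult_0_r, cot_reg_0, cot_tail_sum_0. field.
Qed.

(* On a neighbourhood of x, [defect] is given by a single one of its two forms. *)
Lemma defect_continuous (x : R) : 0 <= x <= 1 -> continuous defect x.
Proof.
  intros Hx. destruct (Rlt_le_dec x (1 / 2)) as [Hl | Hg].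
  - apply continuous_ext_loc with defect_left; [| apply defect_left_continuous; lra].
    assert (Hr : 0 < 1 / 2 - x) by lra. exists (mkposreal _ Hr). intros y Hy.
    apply Rabs_lt_of_ball, Rabs_def2 in Hy. simpl in Hy.
    unfold defect. destruct (Rlt_dec y (1 / 2)); [reflexivity | lra].
  - apply continuous_ext_loc with defect_right; [| apply defect_right_continuous; lra].
    assert (Hr : 0 < 1 / 4) by lra. exists (mkposreal _ Hr). intros y Hy.
    apply Rabs_lt_of_ball, Rabs_def2 in Hy. simpl in Hy.
    unfold defect. destruct (Rlt_dec y (1 / 2)); [| reflexivity].
    rewrite defect_left_eq, defect_right_eq by lra. reflexivity.
Qed.

Definition cot_pf_partial (x : R) (N : nat) : R := 1 / x + sum_f_R0 (cot_pf x) N.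

Lemma cot_pf_partial_lim (x : R) : 0 < x < 1 -> is_lim_seq (cot_pf_partial x) (cot_pf_sum x).
Proof.
  intros Hx. unfold cot_pf_partial, cot_pf_sum.
  replace (1 / x + 1 / (x - 1) + 1 / (x + 1) + cot_tail_sum x) with (1 / x + Series (cot_pf x))
    by (rewrite Series_cot_pf by exact Hx; ring).
  apply is_lim_seq_plus'; [apply is_lim_seq_const |].
  apply is_lim_seq_ext with (sum_n (cot_pf x)); [intros n; apply sum_n_Reals |].
  apply Series_correct, ex_series_cot_pf, Rabs_le. lra.
Qed.

Lemma cot_pf_dup_step (x n : R) : 0 < x < 1 -> 0 <= n ->
  2 * (x / 2) / ((x / 2) ^ 2 - (n + 2) ^ 2) + 2 * ((x + 1) / 2) / (((x + 1) / 2) ^ 2 - (n + 2) ^ 2)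
  = 2 * (2 * x / (x ^ 2 - (2 * n + 3) ^ 2) + 2 * x / (x ^ 2 - (2 * n + 4) ^ 2))
    + 2 / (x + 2 * n + 5) - 2 / (x + 2 * n + 3).
Proof.
  intros Hx Hn.
  assert ((x / 2) ^ 2 - (n + 2) ^ 2 <> 0) by nra.
  assert (((x + 1) / 2) ^ 2 - (n + 2) ^ 2 <> 0) by nra.
  assert (x ^ 2 - (2 * n + 3) ^ 2 <> 0) by nra.
  assert (x ^ 2 - (2 * n + 4) ^ 2 <> 0) by nra.
  field. repeat split; lra.
Qed.

Lemma cot_pf_at (x : R) (k : nat) (m : R) : INR k + 1 = m ->
  cot_pf x k = 2 * x / (x ^ 2 - m ^ 2).
Proof. intros <-. reflexivity. Qed.

Lemma cot_pf_partial_dup (x : R) (N : nat) : 0 < x < 1 ->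
  cot_pf_partial (x / 2) N + cot_pf_partial ((x + 1) / 2) N
  = 2 * cot_pf_partial x (2 * N + 1) + 2 / (x + 2 * INR N + 3).
Proof.
  intros Hx. induction N as [| N IH].
  - unfold cot_pf_partial, cot_pf. simpl. field. repeat split; nra.
  - unfold cot_pf_partial in *. rewrite !tech5.
    replace (2 * S N + 1)%nat with (S (S (2 * N + 1))) by lia. rewrite !tech5.
    assert (Hn := pos_INR N).
    rewrite !(cot_pf_at _ (S N) (INR N + 2)) by (rewrite S_INR; ring).
    rewrite (cot_pf_at x (S (2 * N + 1)) (2 * INR N + 3))
      by (rewrite S_INR, plus_INR, mult_INR; simpl; ring).
    rewrite (cot_pf_at x (S (S (2 * N + 1))) (2 * INR N + 4))
      by (rewrite !S_INR, plus_INR, mult_INR; simpl; ring).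
    assert (D := cot_pf_dup_step x (INR N) Hx Hn).
    rewrite S_INR. replace (x + 2 * (INR N + 1) + 3) with (x + 2 * INR N + 5) by ring.
    lra.
Qed.

Lemma lim_boundary_term (x : R) : 0 < x -> is_lim_seq (fun N => 2 / (x + 2 * INR N + 3)) 0.
Proof.
  intros Hx.
  replace (Finite 0) with (Rbar_mult 2 (Rbar_inv p_infty)) by (simpl; f_equal; ring).
  apply is_lim_seq_ext with (fun N => 2 * / (2 * INR N + (x + 3))).
  { intros N. unfold Rdiv. do 2 f_equal. ring. }
  apply is_lim_seq_scal_l, is_lim_seq_inv; [| discriminate].
  assert (H2 : is_lim_seq (fun N => 2 * INR N) p_infty).
  { apply is_lim_seq_le_p_loc with (fun N => INR N); [| apply is_lim_seq_INR].
    exists 0%nat. intros n _. pose proof (pos_INR n). lra. }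
  eapply is_lim_seq_plus; [exact H2 | apply is_lim_seq_const | reflexivity].
Qed.

Lemma cot_pf_sum_dup (x : R) : 0 < x < 1 ->
  cot_pf_sum (x / 2) + cot_pf_sum ((x + 1) / 2) = 2 * cot_pf_sum x.
Proof.
  intros Hx.
  assert (L1 : is_lim_seq (fun N => cot_pf_partial (x / 2) N + cot_pf_partial ((x + 1) / 2) N)
                 (cot_pf_sum (x / 2) + cot_pf_sum ((x + 1) / 2)))
    by (apply is_lim_seq_plus'; apply cot_pf_partial_lim; lra).
  assert (L2 : is_lim_seq (fun N => 2 * cot_pf_partial x (2 * N + 1) + 2 / (x + 2 * INR N + 3))
                 (2 * cot_pf_sum x + 0)).
  { apply is_lim_seq_plus'; [| apply lim_boundary_term; lra].
    apply is_lim_seq_scal_l with (a := 2) (lu := cot_pf_sum x) (u := fun N => cot_pf_partial x (2 * N + 1)).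
    apply (is_lim_seq_subseq (cot_pf_partial x) _ (fun N => 2 * N + 1)%nat).
    - apply eventually_subseq. intros n. lia.
    - apply cot_pf_partial_lim, Hx. }
  apply is_lim_seq_ext with (v := fun N => 2 * cot_pf_partial x (2 * N + 1) + 2 / (x + 2 * INR N + 3))
    in L1; [| intros N; apply cot_pf_partial_dup, Hx].
  assert (U := is_lim_seq_unique _ _ L1). rewrite (is_lim_seq_unique _ _ L2) in U.
  injection U. lra.
Qed.

(* The same duplication identity for pi cot (pi x) (double-angle formulas). *)
Lemma cot_dup (x : R) : 0 < x < 1 ->
  PI * cot (PI * (x / 2)) + PI * cot (PI * ((x + 1) / 2)) = 2 * (PI * cot (PI * x)).
Proof.
  intros Hx. pose proof PI_RGT_0. set (t := PI * (x / 2)).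
  assert (Ht : 0 < t < PI / 2) by (unfold t; split; nra).
  assert (Hs : 0 < sin t) by (apply sin_gt_0; lra).
  assert (Hc : 0 < cos t) by (apply cos_gt_0; lra).
  replace (PI * ((x + 1) / 2)) with (t + PI / 2) by (unfold t; field).
  replace (PI * x) with (2 * t) by (unfold t; field).
  unfold cot. rewrite cos_plus, sin_plus, cos_PI2, sin_PI2, sin_2a, cos_2a.
  field. split; lra.
Qed.

Lemma defect_dup (x : R) : 0 < x < 1 -> defect (x / 2) + defect ((x + 1) / 2) = 2 * defect x.
Proof.
  intros Hx. rewrite !defect_eq by lra.
  pose proof (cot_pf_sum_dup x Hx). pose proof (cot_dup x Hx). lra.
Qed.

Lemma small_pow2 (d : R) : 0 < d -> exists n, / 2 ^ n < d.
Proof.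
  intros Hd. destruct (nat_above (/ d)) as [n Hn]. exists n.
  assert (Hp : INR n + 1 <= 2 ^ n).
  { clear Hn. induction n as [| n IH]; [simpl; lra |].
    rewrite S_INR. simpl. pose proof (pos_INR n).
    assert (1 <= 2 ^ n) by (apply pow_R1_Rle; lra). lra. }
  rewrite <- (Rinv_inv d). apply Rinv_lt_contravar; [| lra].
  apply Rmult_lt_0_compat; [apply Rinv_0_lt_compat, Hd | apply pow_lt; lra].
Qed.

(* If M = F m is the maximum of F on [0,1],
   both averaged values at m/2 and (m+1)/2 are <= M, hence both equal M; iterating,
   F (m / 2^n) = M, and letting n -> oo gives M = F 0 = 0. *)
Lemma herglotz_max (F : R -> R) :
  (forall x, 0 <= x <= 1 -> continuous F x) -> F 0 = 0 ->
  (forall x, 0 <= x <= 1 -> F (x / 2) + F ((x + 1) / 2) = 2 * F x) ->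
  forall x, 0 <= x <= 1 -> F x <= 0.
Proof.
  intros Hc H0 Hd.
  destruct (continuity_ab_maj F 0 1) as [m [HM Hm]]; [lra | |].
  { intros c Hc'. apply continuity_pt_filterlim, Hc, Hc'. }
  assert (Hiter : forall n, 0 <= m / 2 ^ n <= 1 /\ F (m / 2 ^ n) = F m).
  { induction n as [| n [IH1 IH2]]; [simpl; rewrite Rdiv_1_r; auto |].
    set (y := m / 2 ^ n) in *.
    replace (m / 2 ^ S n) with (y / 2) by (unfold y; simpl; field; apply pow_nonzero; lra).
    pose proof (Hd y IH1). pose proof (HM (y / 2) ltac:(lra)). pose proof (HM ((y + 1) / 2) ltac:(lra)).
    split; lra. }
  intros x Hx. eapply Rle_trans; [apply HM, Hx |].
  apply Rnot_lt_le. intros Hpos.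
  destruct (proj1 (filterlim_locally (F := locally 0) F (F 0)) (Hc 0 ltac:(lra)) (mkposreal _ Hpos))
    as [d Hdd].
  destruct (small_pow2 d (cond_pos d)) as [n Hn].
  destruct (Hiter n) as [[Hn1 Hn2] Hn3].
  assert (Hb : ball 0 d (m / 2 ^ n)).
  { apply ball_of_Rabs_lt. rewrite Rminus_0_r, Rabs_pos_eq by lra.
    eapply Rle_lt_trans; [| exact Hn]. unfold Rdiv. rewrite <- (Rmult_1_l (/ 2 ^ n)) at 2.
    apply Rmult_le_compat_r; [apply Rlt_le, Rinv_0_lt_compat, pow_lt |]; lra. }
  specialize (Hdd _ Hb). apply Rabs_lt_of_ball in Hdd. simpl in Hdd.
  rewrite H0, Hn3, Rminus_0_r, Rabs_pos_eq in Hdd by lra. lra.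
Qed.

(* A function continuous on [0,1] that vanishes on (0,1) vanishes on [0,1]:
   every x in [0,1] is a limit of the points (1 - t) x + t/2 of (0,1). *)
Lemma vanish_closure (G : R -> R) :
  (forall x, 0 <= x <= 1 -> continuous G x) -> (forall y, 0 < y < 1 -> G y = 0) ->
  forall x, 0 <= x <= 1 -> G x = 0.
Proof.
  intros Hc H0 x Hx. apply zero_of_close_zeros; [apply Hc, Hx |]. intros d.
  set (t := Rmin d (1 / 2)).
  assert (Ht : 0 < t <= 1 / 2 /\ t <= d)
    by (unfold t, Rmin; destruct (Rle_dec d (1 / 2)); destruct d; simpl in *; lra).
  clearbody t. exists ((1 - t) * x + t / 2). split; [| apply H0; nra].
  replace ((1 - t) * x + t / 2 - x) with (t * (1 / 2 - x)) by field.
  rewrite Rabs_mult, Rabs_pos_eq by lra.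
  assert (Rabs (1 / 2 - x) <= 1 / 2) by (apply Rabs_le; lra). nra.
Qed.

(* The identity extends to the endpoints by
   continuity, and [herglotz_max] applies to both F and -F. *)
Lemma herglotz (F : R -> R) :
  (forall x, 0 <= x <= 1 -> continuous F x) -> F 0 = 0 ->
  (forall x, 0 < x < 1 -> F (x / 2) + F ((x + 1) / 2) = 2 * F x) ->
  forall x, 0 <= x <= 1 -> F x = 0.
Proof.
  intros Hc H0 Hd.
  set (G := fun x => F (x / 2) + F ((x + 1) / 2) - 2 * F x).
  assert (HG : forall x, 0 <= x <= 1 -> G x = 0).
  { apply vanish_closure; [| intros y Hy; unfold G; rewrite Hd by exact Hy; ring].
    intros x Hx. unfold G.
    apply (continuous_minus (V:=R_NormedModule)); [apply (continuous_plus (V:=R_NormedModule)) |].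
    - apply (continuous_comp (fun t => t / 2) F); [apply continuous_of_derive; auto_derive; auto |].
      apply Hc. lra.
    - apply (continuous_comp (fun t => (t + 1) / 2) F); [apply continuous_of_derive; auto_derive; auto |].
      apply Hc. lra.
    - apply (continuous_scal_r (V:=R_NormedModule) 2), Hc, Hx. }
  assert (Hdup : forall x, 0 <= x <= 1 -> F (x / 2) + F ((x + 1) / 2) = 2 * F x)
    by (intros x Hx; specialize (HG x Hx); unfold G in HG; lra).
  intros x Hx. apply Rle_antisym; [apply herglotz_max; assumption |].
  assert (- F x <= 0); [| lra].
  apply (herglotz_max (fun t => - F t)); [| rewrite H0; ring | | exact Hx].
  - intros y Hy. apply (continuous_opp (V:=R_NormedModule)), Hc, Hy.
  - intros y Hy. pose proof (Hdup y Hy). lra.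
Qed.

Theorem cot_partial_fractions (z : R) : 0 < z < 1 ->
  is_series (cot_pf z) (PI * cot (PI * z) - 1 / z).
Proof.
  intros Hz.
  assert (HD := herglotz defect defect_continuous defect_0 defect_dup z ltac:(lra)).
  rewrite defect_eq in HD by exact Hz.
  replace (PI * cot (PI * z) - 1 / z) with (cot_pf_sum z - 1 / z) by lra.
  unfold is_series. change (is_lim_seq (sum_n (cot_pf z)) (cot_pf_sum z - 1 / z)).
  apply is_lim_seq_ext with (fun N => cot_pf_partial z N - 1 / z).
  - intros N. unfold cot_pf_partial. rewrite sum_n_Reals. ring.
  - apply is_lim_seq_minus'; [apply cot_pf_partial_lim, Hz | apply is_lim_seq_const].
Qed.

Lemma inv_succ_range (a : R) : 0 < a -> 0 < 1 / (a + 1) < 1.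
Proof.
  intros Ha. split; [apply Rdiv_lt_0_compat; lra |].
  apply Rmult_lt_reg_r with (a + 1); [lra |]. unfold Rdiv. rewrite Rmult_assoc, Rinv_l by lra. lra.
Qed.

Lemma term_as_cot_pf (a : R) (n : nat) : 0 < a ->
  term a (S n) = - (a / (2 * (a + 1) ^ 2)) * cot_pf (1 / (a + 1)) n.
Proof.
  intros Ha. rewrite term_closed_form by exact Ha. unfold cot_pf. rewrite S_INR.
  pose proof (pos_INR n). pose proof (inv_succ_range a Ha).
  assert ((a + 1) ^ 2 * (INR n + 1) ^ 2 - 1 <> 0) by nra.
  assert ((1 / (a + 1)) ^ 2 - (INR n + 1) ^ 2 <> 0) by nra.
  field. repeat split; try lra; auto.
Qed.

Definition series_value (a : R) : R :=
  a / (2 * (a + 1)) - a * PI / (2 * (a + 1) ^ 2) * cot (PI / (a + 1)).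

Lemma term_series (a : R) : 0 < a -> is_series (fun n => term a (S n)) (series_value a).
Proof.
  intros Ha. set (k := - (a / (2 * (a + 1) ^ 2))). set (z := 1 / (a + 1)).
  assert (H := is_series_scal_l k _ _ (cot_partial_fractions z (inv_succ_range a Ha))).
  replace (series_value a) with (k * (PI * cot (PI * z) - 1 / z)).
  - eapply is_series_ext; [| exact H]. intros n. simpl. rewrite term_as_cot_pf by exact Ha. reflexivity.
  - unfold series_value, k, z. replace (PI * (1 / (a + 1))) with (PI / (a + 1)) by (field; lra).
    field. lra.
Qed.

(* cot (a PI / (a+1)) = cot (PI - PI / (a+1)) = - cot (PI / (a+1)). *)
Lemma cot_complement (a : R) : 0 < a -> cot (a * PI / (a + 1)) = - cot (PI / (a + 1)).
Proof.
  intros Ha. replace (a * PI / (a + 1)) with (PI - PI / (a + 1)) by (field; lra).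
  unfold cot. rewrite sin_PI_x, cos_minus, cos_PI, sin_PI. unfold Rdiv. ring.
Qed.

Definition phip (a x : R) : R := Rpower x a * (1 - x).

Lemma phi_eq_phip (a x : R) : 0 < x -> phi a x = phip a x.
Proof. intros Hx. unfold phi, phip. rewrite !rpow_pos, Rpower_S by exact Hx. ring. Qed.

(* With the convention 0^y = 0, phi a vanishes on (-oo, 0]. *)
Lemma phi_nonpos (a x : R) : x <= 0 -> phi a x = 0.
Proof. intros Hx. unfold phi, rpow. destruct (Rle_dec x 0); [ring | lra]. Qed.

Lemma x0_range (a : R) : 0 < a -> 0 < x0 a < 1.
Proof.
  intros Ha. unfold x0. split; [apply Rdiv_lt_0_compat; lra |].
  apply Rmult_lt_reg_r with (a + 1); [lra |]. unfold Rdiv. rewrite Rmult_assoc, Rinv_l by lra. lra.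
Qed.

Lemma phip_1 (a : R) : phip a 1 = 0.
Proof. unfold phip. ring. Qed.

Lemma phip_continuous (a x : R) : 0 < x -> continuous (phip a) x.
Proof. intros Hx. apply continuous_of_derive. unfold phip, Rpower. auto_derive. exact Hx. Qed.

(* Mean value form of phi a: the derivative x^(a-1) (a - (a+1) x) has the sign of x0 a - x. *)
Lemma phip_mvt (a y1 y2 : R) : 0 < a -> 0 < y1 < y2 ->
  exists c, y1 < c < y2 /\ 0 < c /\
    phip a y2 - phip a y1 = Rpower c a * (a - (a + 1) * c) / c * (y2 - y1).
Proof.
  intros Ha Hy.
  destruct (MVT_cor2 (phip a) (fun x => Rpower x a * (a - (a + 1) * x) / x) y1 y2 (proj2 Hy))
    as [c [Hc1 Hc2]].
  - intros c Hc. apply is_derive_Reals. unfold phip, Rpower. auto_derive; [lra |]. field. lra.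
  - exists c. repeat split; lra.
Qed.

Lemma x0_sign (a c : R) : 0 < a ->
  (c < x0 a -> (a + 1) * c < a) /\ (x0 a < c -> a < (a + 1) * c).
Proof.
  intros Ha. unfold x0.
  assert (E : (a + 1) * (a / (a + 1)) = a) by (field; lra).
  split; intros H; apply Rmult_lt_compat_l with (r := a + 1) in H; lra.
Qed.

Lemma phip_increasing (a : R) : 0 < a -> forall y1 y2, 0 < y1 -> y1 < y2 -> y2 <= x0 a ->
  phip a y1 < phip a y2.
Proof.
  intros Ha y1 y2 H1 H2 H3. destruct (phip_mvt a y1 y2 Ha (conj H1 H2)) as (c & Hc & Hc0 & E).
  assert (Hs : (a + 1) * c < a) by (apply (x0_sign a c Ha); lra).
  assert (0 < Rpower c a * (a - (a + 1) * c) / c).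
  { apply Rdiv_lt_0_compat; [apply Rmult_lt_0_compat; [apply Rpower_pos | lra] | exact Hc0]. }
  nra.
Qed.

Lemma phip_decreasing (a : R) : 0 < a -> forall y1 y2, x0 a <= y1 -> y1 < y2 -> y2 <= 1 ->
  phip a y2 < phip a y1.
Proof.
  intros Ha y1 y2 H1 H2 H3. pose proof (x0_range a Ha).
  assert (Hy1 : 0 < y1) by lra.
  destruct (phip_mvt a y1 y2 Ha (conj Hy1 H2)) as (c & Hc & Hc0 & E).
  assert (Hs : a < (a + 1) * c) by (apply (x0_sign a c Ha); lra).
  assert (0 < Rpower c a * ((a + 1) * c - a) / c).
  { apply Rdiv_lt_0_compat; [apply Rmult_lt_0_compat; [apply Rpower_pos | lra] | exact Hc0]. }
  replace (Rpower c a * (a - (a + 1) * c) / c) with (- (Rpower c a * ((a + 1) * c - a) / c)) in E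
    by (field; lra).
  nra.
Qed.

Lemma phip_nonincreasing (a : R) : 0 < a -> forall s t, x0 a <= s -> s <= t -> t <= 1 ->
  phip a t <= phip a s.
Proof.
  intros Ha s t H1 H2 H3. destruct (Req_EM_T s t) as [-> | Hn]; [lra |].
  apply Rlt_le, phip_decreasing; auto. lra.
Qed.

Definition phi_max (a : R) : R := phip a (x0 a).

Lemma phip_range (a x : R) : 0 < a -> 0 < x <= 1 -> 0 <= phip a x <= phi_max a.
Proof.
  intros Ha Hx. pose proof (x0_range a Ha). split.
  - unfold phip. pose proof (Rpower_pos x a). nra.
  - unfold phi_max. destruct (Rle_lt_dec x (x0 a)).
    + destruct (Req_EM_T x (x0 a)) as [-> |]; [lra |]. apply Rlt_le, phip_increasing; auto; lra.
    + apply phip_nonincreasing; auto; lra.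
Qed.

Lemma phi_range (a x : R) : 0 < a -> x <= 1 -> 0 <= phi a x <= phi_max a.
Proof.
  intros Ha Hx. destruct (Rle_lt_dec x 0).
  - rewrite phi_nonpos by assumption. pose proof (x0_range a Ha).
    pose proof (phip_range a (x0 a) Ha ltac:(lra)). unfold phi_max. lra.
  - rewrite phi_eq_phip by assumption. apply phip_range; auto.
Qed.

Lemma phip_injective (a : R) : 0 < a -> forall s t, x0 a <= s <= 1 -> x0 a <= t <= 1 ->
  phip a s = phip a t -> s = t.
Proof.
  intros Ha s t Hs Ht E. destruct (Rtotal_order s t) as [Hl | [He | Hg]]; auto.
  - assert (phip a t < phip a s) by (apply phip_decreasing; lra). lra.
  - assert (phip a s < phip a t) by (apply phip_decreasing; lra). lra.
Qed.

(* Every value in [0, phi_max a] is attained on [x0 a, 1] (intermediate values),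
   so [r_inv] picks the unique such preimage. *)
Lemma r_inv_spec (a v : R) : 0 < a -> 0 <= v <= phi_max a ->
  x0 a <= r_inv a v <= 1 /\ phip a (r_inv a v) = v.
Proof.
  intros Ha Hv. pose proof (x0_range a Ha).
  assert (Hex : exists y, x0 a <= y <= 1 /\ phi a y = v).
  { destruct (Req_EM_T v (phi_max a)) as [-> | HM].
    { exists (x0 a). split; [lra |]. apply phi_eq_phip. lra. }
    destruct (Req_EM_T v 0) as [-> | H0].
    { exists 1. split; [lra |]. rewrite phi_eq_phip by lra. apply phip_1. }
    destruct (Ranalysis5.IVT_interv (fun t => v - phip a t) (x0 a) 1) as [z [Hz1 Hz2]].
    - intros t Ht. apply continuity_pt_filterlim.
      apply (continuous_minus (V:=R_NormedModule)); [apply continuous_const | apply phip_continuous; lra].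
    - lra.
    - unfold phi_max in *. lra.
    - rewrite phip_1. lra.
    - exists z. split; [lra |]. rewrite phi_eq_phip by lra. lra. }
  destruct (epsilon_spec (inhabits 0) (fun y => x0 a <= y <= 1 /\ phi a y = v) Hex) as [H1 H2].
  fold (r_inv a v) in H1, H2. split; [exact H1 |]. rewrite <- phi_eq_phip; [exact H2 | lra].
Qed.

Lemma r_inv_char (a v y : R) : 0 < a -> x0 a <= y <= 1 -> phip a y = v -> r_inv a v = y.
Proof.
  intros Ha Hy E. pose proof (x0_range a Ha).
  assert (Hv : 0 <= v <= phi_max a) by (rewrite <- E; apply phip_range; auto; lra).
  destruct (r_inv_spec a v Ha Hv) as [H1 H2]. apply (phip_injective a Ha); auto. lra.
Qed.

Lemma g_id (a x : R) : 0 < a -> x0 a <= x <= 1 -> g a x = x.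
Proof.
  intros Ha Hx. pose proof (x0_range a Ha). unfold g. apply r_inv_char; auto.
  symmetry. apply phi_eq_phip. lra.
Qed.

Lemma g_range (a x : R) : 0 < a -> x <= 1 -> x0 a <= g a x <= 1.
Proof. intros Ha Hx. unfold g. apply r_inv_spec; [exact Ha | apply phi_range; auto]. Qed.

(* r_inv a, the inverse of a continuous decreasing function, is continuous. *)
Lemma r_inv_continuous (a v : R) : 0 < a -> 0 <= v <= phi_max a -> forall eps, 0 < eps ->
  exists d, 0 < d /\ forall v', 0 <= v' <= phi_max a -> Rabs (v' - v) < d ->
    Rabs (r_inv a v' - r_inv a v) < eps.
Proof.
  intros Ha Hv eps He. pose proof (x0_range a Ha).
  destruct (r_inv_spec a v Ha Hv) as [Hy Ey]. set (y := r_inv a v) in *.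
  assert (Hlow : exists d1, 0 < d1 /\
            forall y', x0 a <= y' <= 1 -> phip a y' < v + d1 -> y - eps < y').
  { destruct (Req_EM_T y (x0 a)) as [Eq | Hne]; [exists 1; split; [lra | intros; lra] |].
    set (yl := Rmax (x0 a) (y - eps / 2)).
    assert (Hyl : x0 a <= yl < y /\ y - eps / 2 <= yl)
      by (unfold yl, Rmax; destruct (Rle_dec (x0 a) (y - eps / 2)); lra).
    assert (v < phip a yl) by (rewrite <- Ey; apply phip_decreasing; lra).
    exists (phip a yl - v). split; [lra |]. intros y' Hy' Hv'.
    apply Rnot_le_lt. intros Hc. assert (phip a yl <= phip a y') by (apply phip_nonincreasing; lra). lra. }
  assert (Hup : exists d2, 0 < d2 /\
            forall y', x0 a <= y' <= 1 -> v - d2 < phip a y' -> y' < y + eps).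
  { destruct (Req_EM_T y 1) as [Eq | Hne]; [exists 1; split; [lra | intros; lra] |].
    set (yh := Rmin 1 (y + eps / 2)).
    assert (Hyh : y < yh <= 1 /\ yh <= y + eps / 2)
      by (unfold yh, Rmin; destruct (Rle_dec 1 (y + eps / 2)); lra).
    assert (phip a yh < v) by (rewrite <- Ey; apply phip_decreasing; lra).
    exists (v - phip a yh). split; [lra |]. intros y' Hy' Hv'.
    apply Rnot_le_lt. intros Hc. assert (phip a y' <= phip a yh) by (apply phip_nonincreasing; lra). lra. }
  destruct Hlow as [d1 [Hd1 Hl]]. destruct Hup as [d2 [Hd2 Hu]].
  exists (Rmin d1 d2). split; [apply Rmin_pos; auto |].
  intros v' Hv' Hd. pose proof (Rmin_l d1 d2). pose proof (Rmin_r d1 d2).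
  destruct (r_inv_spec a v' Ha Hv') as [Hy' Ey'].
  apply Rabs_def2 in Hd. apply Rabs_def1.
  - assert (r_inv a v' < y + eps) by (apply Hu; auto; lra). lra.
  - assert (y - eps < r_inv a v') by (apply Hl; auto; lra). lra.
Qed.

Lemma phi_continuous (a x : R) : 0 < a -> 0 <= x < 1 -> continuous (phi a) x.
Proof.
  intros Ha Hx. destruct (Req_EM_T x 0) as [-> | Hn].
  - (* at 0: |phi a y| <= y^a for 0 < y < 1, and phi a = 0 on (-oo, 0] *)
    apply filterlim_locally. intros eps.
    assert (Hd : 0 < Rmin 1 (Rpower eps (/ a))) by (apply Rmin_pos; [lra | apply Rpower_pos]).
    exists (mkposreal _ Hd). intros y Hy. apply Rabs_lt_of_ball, Rabs_def2 in Hy. simpl in Hy.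
    apply ball_of_Rabs_lt. rewrite (phi_nonpos a 0), Rminus_0_r by lra.
    pose proof (Rmin_l 1 (Rpower eps (/ a))). pose proof (Rmin_r 1 (Rpower eps (/ a))).
    destruct (Rle_lt_dec y 0).
    + rewrite phi_nonpos, Rabs_R0 by assumption. apply cond_pos.
    + rewrite phi_eq_phip by assumption. unfold phip.
      assert (Rpower y a < eps) by (apply Rpower_small; [exact Ha | apply cond_pos | lra]).
      pose proof (Rpower_pos y a). rewrite Rabs_pos_eq by nra. nra.
  - apply continuous_ext_loc with (phip a); [| apply phip_continuous; lra].
    apply filter_imp with (2 := locally_pos x ltac:(lra)). intros y Hy.
    symmetry. apply phi_eq_phip, Hy.
Qed.

Lemma g_continuous (a x : R) : 0 < a -> 0 <= x <= x0 a -> continuous (g a) x.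
Proof.
  intros Ha Hx. pose proof (x0_range a Ha).
  apply filterlim_locally. intros eps.
  destruct (r_inv_continuous a (phi a x) Ha (phi_range a x Ha ltac:(lra)) eps (cond_pos eps))
    as [d [Hd Hdd]].
  destruct (proj1 (filterlim_locally (F := locally x) (phi a) (phi a x))
              (phi_continuous a x Ha ltac:(lra)) (mkposreal d Hd)) as [d1 Hd1].
  assert (Hr : 0 < Rmin d1 (1 - x0 a)) by (apply Rmin_pos; [apply cond_pos | lra]).
  exists (mkposreal _ Hr). intros y Hy. apply Rabs_lt_of_ball in Hy. simpl in Hy.
  pose proof (Rmin_l d1 (1 - x0 a)). pose proof (Rmin_r d1 (1 - x0 a)).
  specialize (Hd1 y (ball_of_Rabs_lt x d1 y ltac:(lra))). apply Rabs_lt_of_ball in Hd1. simpl in Hd1.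
  apply ball_of_Rabs_lt. unfold g. apply Hdd; [| exact Hd1].
  apply phi_range; [exact Ha |]. apply Rabs_def2 in Hy. lra.
Qed.

Lemma ex_RInt_g (a s t : R) : 0 < a -> 0 <= s <= x0 a -> 0 <= t <= x0 a -> ex_RInt (g a) s t.
Proof.
  intros Ha Hs Ht. apply (ex_RInt_continuous (V:=R_CompleteNormedModule)). intros z Hz.
  apply g_continuous; [exact Ha |]. unfold Rmin, Rmax in Hz. destruct (Rle_dec s t); lra.
Qed.

Lemma integral_g_x0_1 (a : R) : 0 < a -> is_RInt (g a) (x0 a) 1 ((1 - x0 a ^ 2) / 2).
Proof.
  intros Ha. pose proof (x0_range a Ha).
  apply is_RInt_ext with (fun t => t).
  { intros x Hx. rewrite Rmin_left, Rmax_right in Hx by lra. symmetry. apply g_id; auto. lra. }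
  replace ((1 - x0 a ^ 2) / 2) with (1 ^ 2 / 2 - x0 a ^ 2 / 2) by field.
  apply (FTC (fun t => t ^ 2 / 2)); intros x _.
  - auto_derive; auto. field.
  - apply continuous_of_derive. auto_derive. auto.
Qed.

(* Then phi a (X u) = phi a (Y u), with X u in (0, x0 a) and Y u in (x0 a, 1), so
   g a (X u) = Y u; as u runs over (0,1), X u runs from 0 to x0 a. *)
Definition Ycurve (a u : R) : R := (1 - Rpower u a) / (1 - u * Rpower u a).
Definition Xcurve (a u : R) : R := u * Ycurve a u.

Definition weight (a u : R) : R := Rpower u a / u * (1 - u ^ 2) / (1 - u * Rpower u a).

(* Explicit derivatives of Y and X, and a primitive of Y X' up to an affine term and
   a multiple of the weight. *)
Definition Ycurve' (a u : R) : R :=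
  (- (a * Rpower u a / u) * (1 - u * Rpower u a) + (1 - Rpower u a) * ((a + 1) * Rpower u a))
  / (1 - u * Rpower u a) ^ 2.
Definition Xcurve' (a u : R) : R := Ycurve a u + u * Ycurve' a u.
Definition curve_prim (a u : R) : R :=
  u * Ycurve a u ^ 2 / 2 - (1 - u) * (1 + Ycurve a u) / (2 * (a + 1)).
Definition curve_prim' (a u : R) : R :=
  Xcurve' a u * Ycurve a u - (1 / 2 - 1 / (a + 1)) + a / (2 * (a + 1)) * weight a u.

Lemma curve_den_pos (a u : R) : 0 < a -> 0 < u < 1 -> 0 < 1 - u * Rpower u a.
Proof. intros Ha Hu. pose proof (Rpower_lt_1 a u Ha Hu). pose proof (Rpower_pos u a). nra. Qed.

(* 1 - (a+1) u^a + a u^(a+1) > 0 on (0,1): it vanishes at 1 and decreases. *)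
Lemma curve_aux_pos1 (a u : R) : 0 < a -> 0 < u < 1 ->
  0 < 1 - (a + 1) * Rpower u a + a * u * Rpower u a.
Proof.
  intros Ha Hu.
  set (q := fun t => 1 - (a + 1) * Rpower t a + a * t * Rpower t a).
  destruct (MVT_cor2 q (fun t => a * (a + 1) * Rpower t a * (t - 1) / t) u 1) as [c [Hc1 Hc2]]; [lra | |].
  { intros c Hc. apply is_derive_Reals. unfold q, Rpower. auto_derive; [lra |]. field. lra. }
  unfold q in Hc1. rewrite Rpower_1_base in Hc1.
  assert (0 < a * (a + 1) * Rpower c a * (1 - c) * / c)
    by (repeat apply Rmult_lt_0_compat; try apply Rpower_pos; try apply Rinv_0_lt_compat; lra).
  replace (a * (a + 1) * Rpower c a * (c - 1) / c) with (- (a * (a + 1) * Rpower c a * (1 - c) * / c))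
    in Hc1 by (field; lra).
  unfold q. nra.
Qed.

(* a - (a+1) u + u^(a+1) > 0 on (0,1): it vanishes at 1 and decreases. *)
Lemma curve_aux_pos2 (a u : R) : 0 < a -> 0 < u < 1 -> 0 < a - (a + 1) * u + u * Rpower u a.
Proof.
  intros Ha Hu.
  set (r := fun t => a - (a + 1) * t + t * Rpower t a).
  destruct (MVT_cor2 r (fun t => (a + 1) * (Rpower t a - 1)) u 1) as [c [Hc1 Hc2]]; [lra | |].
  { intros c Hc. apply is_derive_Reals. unfold r, Rpower. auto_derive; [lra |]. field. lra. }
  unfold r in Hc1. rewrite Rpower_1_base in Hc1.
  assert (Rpower c a < 1) by (apply Rpower_lt_1; lra).
  assert (0 < (a + 1) * (1 - Rpower c a) * (1 - u)) by (repeat apply Rmult_lt_0_compat; lra).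
  unfold r. lra.
Qed.

Lemma Ycurve_range (a u : R) : 0 < a -> 0 < u < 1 -> x0 a < Ycurve a u < 1.
Proof.
  intros Ha Hu. pose proof (curve_den_pos a u Ha Hu).
  pose proof (Rpower_pos u a). pose proof (Rpower_lt_1 a u Ha Hu).
  unfold Ycurve, x0. split.
  - apply Rmult_lt_reg_r with ((a + 1) * (1 - u * Rpower u a)); [nra |].
    replace (a / (a + 1) * ((a + 1) * (1 - u * Rpower u a))) with (a * (1 - u * Rpower u a))
      by (field; lra).
    replace ((1 - Rpower u a) / (1 - u * Rpower u a) * ((a + 1) * (1 - u * Rpower u a)))
      with ((a + 1) * (1 - Rpower u a)) by (field; lra).
    pose proof (curve_aux_pos1 a u Ha Hu). nra.
  - apply Rmult_lt_reg_r with (1 - u * Rpower u a); [assumption |].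
    replace ((1 - Rpower u a) / (1 - u * Rpower u a) * (1 - u * Rpower u a)) with (1 - Rpower u a)
      by (field; lra).
    nra.
Qed.

Lemma Xcurve_range (a u : R) : 0 < a -> 0 < u < 1 -> 0 < Xcurve a u < x0 a.
Proof.
  intros Ha Hu. pose proof (curve_den_pos a u Ha Hu).
  pose proof (Rpower_pos u a). pose proof (Rpower_lt_1 a u Ha Hu).
  pose proof (Ycurve_range a u Ha Hu). pose proof (x0_range a Ha).
  unfold Xcurve. split; [nra |].
  unfold Ycurve, x0. apply Rmult_lt_reg_r with ((a + 1) * (1 - u * Rpower u a)); [nra |].
  replace (a / (a + 1) * ((a + 1) * (1 - u * Rpower u a))) with (a * (1 - u * Rpower u a))
    by (field; lra).
  replace (u * ((1 - Rpower u a) / (1 - u * Rpower u a)) * ((a + 1) * (1 - u * Rpower u a)))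
    with ((a + 1) * u * (1 - Rpower u a)) by (field; lra).
  pose proof (curve_aux_pos2 a u Ha Hu). nra.
Qed.

Lemma g_on_curve (a u : R) : 0 < a -> 0 < u < 1 -> g a (Xcurve a u) = Ycurve a u.
Proof.
  intros Ha Hu. pose proof (Ycurve_range a u Ha Hu). pose proof (Xcurve_range a u Ha Hu).
  pose proof (x0_range a Ha). pose proof (curve_den_pos a u Ha Hu).
  unfold g. rewrite phi_eq_phip by lra. apply r_inv_char; [exact Ha | lra |].
  unfold phip, Xcurve. rewrite <- Rpower_mult_distr by lra.
  unfold Ycurve. field. lra.
Qed.

Lemma Xcurve_deriv (a u : R) : 0 < a -> 0 < u < 1 -> is_derive (Xcurve a) u (Xcurve' a u).
Proof.
  intros Ha Hu. pose proof (curve_den_pos a u Ha Hu).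
  unfold Xcurve, Xcurve', Ycurve', Ycurve, Rpower in *. auto_derive.
  - repeat split; lra.
  - field. split; lra.
Qed.

Lemma curve_prim_deriv (a u : R) : 0 < a -> 0 < u < 1 -> is_derive (curve_prim a) u (curve_prim' a u).
Proof.
  intros Ha Hu. pose proof (curve_den_pos a u Ha Hu).
  unfold curve_prim, curve_prim', Xcurve', Ycurve', Ycurve, weight, Rpower in *. auto_derive.
  - repeat split; lra.
  - field. repeat split; lra.
Qed.

Lemma Xcurve'_continuous (a u : R) : 0 < a -> 0 < u < 1 -> continuous (Xcurve' a) u.
Proof.
  intros Ha Hu. pose proof (curve_den_pos a u Ha Hu). apply continuous_of_derive.
  unfold Xcurve', Ycurve', Ycurve, Rpower in *. auto_derive. repeat split; try lra; try (intro; nra).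
Qed.

Lemma curve_prim'_continuous (a u : R) : 0 < a -> 0 < u < 1 -> continuous (curve_prim' a) u.
Proof.
  intros Ha Hu. pose proof (curve_den_pos a u Ha Hu). apply continuous_of_derive.
  unfold curve_prim', Xcurve', Ycurve', Ycurve, weight, Rpower in *. auto_derive.
  repeat split; try lra; try (intro; nra).
Qed.

Lemma weight_continuous (a u : R) : 0 < a -> 0 < u < 1 -> continuous (weight a) u.
Proof.
  intros Ha Hu. pose proof (curve_den_pos a u Ha Hu). apply continuous_of_derive.
  unfold weight, Rpower in *. auto_derive. repeat split; try lra; try (intro; nra).
Qed.

Lemma ex_RInt_weight (a d : R) : 0 < a -> 0 < d < 1 / 2 -> ex_RInt (weight a) d (1 - d).
Proof.
  intros Ha Hd. apply (ex_RInt_continuous (V:=R_CompleteNormedModule)). intros z Hz.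
  apply weight_continuous; [exact Ha | exact (between_sym_01 d z Hd Hz)].
Qed.

(* Substituting x = X u and integrating Y X' with the primitive [curve_prim]:
   int_{X d}^{X (1-d)} g a = (1/2 - 1/(a+1)) (1 - 2d) + [curve_prim]_d^(1-d)
                             - a/(2(a+1)) int_d^(1-d) weight. *)
Lemma integral_g_along_curve (a d : R) : 0 < a -> 0 < d < 1 / 2 ->
  RInt (g a) (Xcurve a d) (Xcurve a (1 - d)) =
  (1 / 2 - 1 / (a + 1)) * (1 - 2 * d) + (curve_prim a (1 - d) - curve_prim a d)
  - a / (2 * (a + 1)) * RInt (weight a) d (1 - d).
Proof.
  intros Ha Hd. pose proof (x0_range a Ha).
  assert (Hin : forall x, Rmin d (1 - d) <= x <= Rmax d (1 - d) -> 0 < x < 1)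
    by (intros x; apply between_sym_01, Hd).
  assert (Hsub : is_RInt (fun u => Xcurve' a u * Ycurve a u) d (1 - d)
                   (RInt (g a) (Xcurve a d) (Xcurve a (1 - d)))).
  { eapply is_RInt_ext; [| apply (is_RInt_comp (V:=R_CompleteNormedModule) (g a) (Xcurve a) (Xcurve' a))].
    - intros x Hx. assert (Hx01 := Hin x ltac:(lra)). simpl. rewrite g_on_curve by assumption. reflexivity.
    - intros x Hx. pose proof (Xcurve_range a x Ha (Hin x Hx)). apply g_continuous; lra.
    - intros x Hx. split; [apply Xcurve_deriv | apply Xcurve'_continuous]; auto. }
  set (c := 1 / 2 - 1 / (a + 1)). set (k := a / (2 * (a + 1))).
  assert (HF : is_RInt (curve_prim' a) d (1 - d) (curve_prim a (1 - d) - curve_prim a d))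
    by (apply FTC; intros x Hx; [apply curve_prim_deriv | apply curve_prim'_continuous]; auto).
  assert (Hw := RInt_correct (V:=R_CompleteNormedModule) _ _ _ (ex_RInt_weight a d Ha Hd)).
  assert (Hsum := is_RInt_minus (V:=R_NormedModule) _ _ _ _ _ _
                    (is_RInt_plus (V:=R_NormedModule) _ _ _ _ _ _
                       (is_RInt_const (V:=R_NormedModule) d (1 - d) c) HF)
                    (is_RInt_scal (V:=R_NormedModule) _ _ _ k _ Hw)).
  assert (Hsum' : is_RInt (fun u => Xcurve' a u * Ycurve a u) d (1 - d)
     (minus (plus (scal (1 - d - d) c) (curve_prim a (1 - d) - curve_prim a d))
            (scal k (RInt (weight a) d (1 - d))))).
  { eapply is_RInt_ext; [| exact Hsum]. intros x Hx.
    unfold curve_prim', minus, plus, scal, opp; simpl. unfold mult; simpl. fold c k. ring. }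
  rewrite <- (is_RInt_unique _ _ _ _ Hsub), (is_RInt_unique _ _ _ _ Hsum').
  unfold minus, plus, scal, opp; simpl. unfold mult; simpl. ring.
Qed.

Lemma lim_Ycurve_0 (a : R) : 0 < a -> filterlim (Ycurve a) (at_right 0) (locally 1).
Proof.
  intros Ha. unfold Ycurve. apply (lim_val _ ((1 - 0) / (1 - 0 * 0))); [field |].
  apply lim_div; [lra | |].
  - apply lim_minus; [apply lim_const | apply lim_Rpower_0, Ha].
  - apply lim_minus; [apply lim_const |]. apply lim_mult; [apply lim_id0 | apply lim_Rpower_0, Ha].
Qed.

Lemma lim_Xcurve_0 (a : R) : 0 < a -> filterlim (Xcurve a) (at_right 0) (locally 0).
Proof.
  intros Ha. unfold Xcurve. apply (lim_val _ (0 * 1)); [ring |].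
  apply lim_mult; [apply lim_id0 | apply lim_Ycurve_0, Ha].
Qed.

Lemma lim_curve_prim_0 (a : R) : 0 < a ->
  filterlim (curve_prim a) (at_right 0) (locally (- 1 / (a + 1))).
Proof.
  intros Ha. unfold curve_prim.
  apply filterlim_ext with
    (fun d => d * (Ycurve a d * Ycurve a d) / 2 - (1 - d) * (1 + Ycurve a d) / (2 * (a + 1)));
    [intros d; simpl; unfold Rdiv; ring |].
  apply (lim_val _ (0 * (1 * 1) / 2 - (1 - 0) * (1 + 1) / (2 * (a + 1)))); [field; lra |].
  pose proof (lim_Ycurve_0 a Ha).
  apply lim_minus; apply lim_div; try lra; try apply lim_const.
  - apply lim_mult; [apply lim_id0 | apply lim_mult; assumption].
  - apply lim_mult; [apply lim_minus; [apply lim_const | apply lim_id0] |].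
    apply lim_plus; [apply lim_const | assumption].
Qed.

(* As u -> 1-: Y u -> x0 a (ratio of the derivatives a and a+1 of u^a and u^(a+1) at 1),
   X u -> x0 a, and [curve_prim] tends to x0^2/2. *)
Lemma lim_Ycurve_1 (a : R) : 0 < a ->
  filterlim (fun d => Ycurve a (1 - d)) (at_right 0) (locally (x0 a)).
Proof.
  intros Ha.
  assert (Q1 : filterlim (fun d => (Rpower 1 a - Rpower (1 - d) a) / d) (at_right 0) (locally a)).
  { apply (lim_left_quotient_1 (fun t => Rpower t a)). apply is_derive_Reals.
    unfold Rpower. auto_derive; [lra |]. rewrite ln_1, Rmult_0_r, exp_0. field. }
  assert (Q2 : filterlim (fun d => (1 * Rpower 1 a - (1 - d) * Rpower (1 - d) a) / d)
                 (at_right 0) (locally (a + 1))).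
  { apply (lim_left_quotient_1 (fun t => t * Rpower t a)). apply is_derive_Reals.
    unfold Rpower. auto_derive; [lra |]. rewrite ln_1, Rmult_0_r, exp_0. field. }
  unfold x0. eapply lim_ext; [| apply lim_div; [lra | exact Q1 | exact Q2]].
  apply (at_right0_of _ 1); [lra |]. intros d Hd. rewrite Rpower_1_base.
  pose proof (curve_den_pos a (1 - d) Ha ltac:(lra)). unfold Ycurve. field. lra.
Qed.

Lemma lim_Xcurve_1 (a : R) : 0 < a ->
  filterlim (fun d => Xcurve a (1 - d)) (at_right 0) (locally (x0 a)).
Proof.
  intros Ha. unfold Xcurve. apply (lim_val _ ((1 - 0) * x0 a)); [ring |].
  apply lim_mult; [apply lim_minus; [apply lim_const | apply lim_id0] | apply lim_Ycurve_1, Ha].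
Qed.

Lemma lim_curve_prim_1 (a : R) : 0 < a ->
  filterlim (fun d => curve_prim a (1 - d)) (at_right 0) (locally (x0 a ^ 2 / 2)).
Proof.
  intros Ha. unfold curve_prim.
  apply filterlim_ext with (fun d => (1 - d) * (Ycurve a (1 - d) * Ycurve a (1 - d)) / 2
                                     - (1 - (1 - d)) * (1 + Ycurve a (1 - d)) / (2 * (a + 1)));
    [intros d; simpl; unfold Rdiv; ring |].
  apply (lim_val _ ((1 - 0) * (x0 a * x0 a) / 2 - (1 - (1 - 0)) * (1 + x0 a) / (2 * (a + 1))));
    [field; lra |].
  assert (H1 : filterlim (fun d : R => 1 - d) (at_right 0) (locally (1 - 0)))
    by (apply lim_minus; [apply lim_const | apply lim_id0]).
  pose proof (lim_Ycurve_1 a Ha).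
  apply lim_minus; apply lim_div; try lra; try apply lim_const.
  - apply lim_mult; [exact H1 | apply lim_mult; assumption].
  - apply lim_mult; [apply lim_minus; [apply lim_const | exact H1] |].
    apply lim_plus; [apply lim_const | assumption].
Qed.

(* Integrals of g a over [X d, X (1-d)] tend to the integral over [0, x0 a]:
   the two missing pieces have length -> 0 and |g a| <= 1. *)
Lemma lim_integral_along_curve (a : R) : 0 < a ->
  filterlim (fun d => RInt (g a) (Xcurve a d) (Xcurve a (1 - d))) (at_right 0)
            (locally (RInt (g a) 0 (x0 a))).
Proof.
  intros Ha. pose proof (x0_range a Ha).
  set (e := fun d => RInt (g a) 0 (Xcurve a d) + RInt (g a) (Xcurve a (1 - d)) (x0 a)).
  assert (Hg : forall t, 0 <= t <= x0 a -> Rabs (g a t) <= 1).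
  { intros t Ht. pose proof (g_range a t Ha ltac:(lra)). rewrite Rabs_pos_eq; lra. }
  assert (He : filterlim e (at_right 0) (locally 0)).
  { apply lim_squeeze0 with (fun d => Xcurve a d + (x0 a - Xcurve a (1 - d))).
    - apply (at_right0_of _ (1 / 2)); [lra |]. intros d Hd.
      pose proof (Xcurve_range a d Ha ltac:(lra)). pose proof (Xcurve_range a (1 - d) Ha ltac:(lra)).
      unfold e. eapply Rle_trans; [apply Rabs_triang |].
      apply Rplus_le_compat; (eapply Rle_trans;
        [apply abs_RInt_le_const; [lra | apply ex_RInt_g; lra | intros t Ht; apply Hg; lra] | lra]).
    - apply (lim_val _ (0 + (x0 a - x0 a))); [ring |].
      apply lim_plus; [apply lim_Xcurve_0, Ha |].
      apply lim_minus; [apply lim_const | apply lim_Xcurve_1, Ha]. }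
  apply (lim_val _ (RInt (g a) 0 (x0 a) - 0)); [ring |].
  eapply lim_ext; [| apply lim_minus; [apply lim_const | exact He]].
  apply (at_right0_of _ (1 / 2)); [lra |]. intros d Hd.
  pose proof (Xcurve_range a d Ha ltac:(lra)). pose proof (Xcurve_range a (1 - d) Ha ltac:(lra)).
  unfold e.
  assert (Hex : forall s t, 0 <= s <= x0 a -> 0 <= t <= x0 a -> ex_RInt (g a) s t)
    by (intros; apply ex_RInt_g; assumption).
  set (p := Xcurve a d) in *. set (q := Xcurve a (1 - d)) in *.
  assert (E1 := RInt_Chasles (g a) 0 p q (Hex 0 p ltac:(lra) ltac:(lra)) (Hex p q ltac:(lra) ltac:(lra))).
  assert (E2 := RInt_Chasles (g a) 0 q (x0 a)
                  (Hex 0 q ltac:(lra) ltac:(lra)) (Hex q (x0 a) ltac:(lra) ltac:(lra))).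
  unfold plus in E1, E2; simpl in E1, E2. lra.
Qed.

(* Expanding 1/(1 - u^(a+1)) geometrically, weight a u = sum_k u^(c_k - 1) (1 - u^2)
   with exponents c_k = a + (a+1) k; the k-th term has primitive
   u^c_k / c_k - u^(c_k+2) / (c_k+2), whose increment over [0,1] is [weight_coef a k]. *)
Definition expo (a : R) (k : nat) : R := a + (a + 1) * INR k.
Definition weight_coef (a : R) (k : nat) : R := 1 / expo a k - 1 / (expo a k + 2).
Definition weight_term (a : R) (k : nat) (u : R) : R := Rpower u (expo a k) / u * (1 - u ^ 2).
Definition weight_term_prim (a : R) (k : nat) (u : R) : R :=
  Rpower u (expo a k) / expo a k - Rpower u (expo a k + 2) / (expo a k + 2).
Definition weight_rem (a : R) (N : nat) (u : R) : R := weight a u * (u * Rpower u a) ^ (S N).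

Lemma expo_pos (a : R) (k : nat) : 0 < a -> 0 < expo a k.
Proof. intros Ha. unfold expo. pose proof (pos_INR k). nra. Qed.

Lemma Rpower_expo (a : R) (k : nat) (u : R) : 0 < u ->
  Rpower u (expo a k) = Rpower u a * (u * Rpower u a) ^ k.
Proof.
  intros Hu. induction k as [| k IH].
  - unfold expo. simpl. rewrite Rmult_0_r, Rplus_0_r. ring.
  - unfold expo in *. rewrite S_INR.
    replace (a + (a + 1) * (INR k + 1)) with ((a + (a + 1) * INR k) + (a + 1)) by ring.
    rewrite Rpower_plus, IH, Rpower_S by exact Hu. simpl. ring.
Qed.

Lemma Rpower_plus_2 (c u : R) : 0 < u -> Rpower u (c + 2) = Rpower u c * u ^ 2.
Proof.
  intros Hu. replace (c + 2) with ((c + 1) + 1) by ring. rewrite !Rpower_S by exact Hu. simpl. ring.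
Qed.

Lemma weight_term_prim_deriv (a : R) (k : nat) (u : R) : 0 < a -> 0 < u ->
  is_derive (weight_term_prim a k) u (weight_term a k u).
Proof.
  intros Ha Hu. pose proof (expo_pos a k Ha). unfold weight_term_prim, weight_term.
  apply is_derive_ext_loc with
    (fun t => Rpower t (expo a k) / expo a k - Rpower t (expo a k) * t ^ 2 / (expo a k + 2)).
  { apply filter_imp with (2 := locally_pos u Hu). intros t Ht. rewrite Rpower_plus_2 by exact Ht.
    reflexivity. }
  unfold Rpower. auto_derive; [repeat split; exact Hu |]. field. lra.
Qed.

Lemma weight_term_continuous (a : R) (k : nat) (u : R) : 0 < u -> continuous (weight_term a k) u.
Proof.
  intros Hu. apply continuous_of_derive. unfold weight_term, Rpower. auto_derive. repeat split; lra.
Qed.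

Lemma weight_expansion (a u : R) (N : nat) : 0 < a -> 0 < u < 1 ->
  weight a u = sum_f_R0 (fun k => weight_term a k u) N + weight_rem a N u.
Proof.
  intros Ha Hu. pose proof (curve_den_pos a u Ha Hu). unfold weight_rem.
  assert (Hk : forall k, weight_term a k u = weight a u * (1 - u * Rpower u a) * (u * Rpower u a) ^ k).
  { intros k. unfold weight_term, weight. rewrite Rpower_expo by lra. field. lra. }
  induction N as [| N IH].
  - simpl. rewrite Hk. simpl. ring.
  - rewrite tech5, Hk. rewrite IH at 1. simpl. ring.
Qed.

Lemma integral_weight_terms (a d : R) (N : nat) : 0 < a -> 0 < d < 1 / 2 ->
  is_RInt (fun u => sum_f_R0 (fun k => weight_term a k u) N) d (1 - d)
          (sum_f_R0 (fun k => weight_term_prim a k (1 - d) - weight_term_prim a k d) N).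
Proof.
  intros Ha Hd.
  assert (Hk : forall k, is_RInt (weight_term a k) d (1 - d)
                           (weight_term_prim a k (1 - d) - weight_term_prim a k d)).
  { intros k. apply FTC; intros x Hx; pose proof (between_sym_01 d x Hd Hx).
    - apply weight_term_prim_deriv; lra.
    - apply weight_term_continuous. lra. }
  induction N as [| N IH]; [apply Hk |].
  eapply is_RInt_ext; [| apply (is_RInt_plus (V:=R_NormedModule) _ _ _ _ _ _ IH (Hk (S N)))].
  intros x _. rewrite tech5. reflexivity.
Qed.

Lemma weight_rem_continuous (a : R) (N : nat) (u : R) : 0 < a -> 0 < u < 1 ->
  continuous (weight_rem a N) u.
Proof.
  intros Ha Hu. pose proof (curve_den_pos a u Ha Hu). apply continuous_of_derive.
  unfold weight_rem, weight, Rpower in *. auto_derive. repeat split; lra.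
Qed.

(* 0 <= remainder <= 2 u^(c_(N+1) - 1), since (1 - u^2)/(1 - u^(a+1)) <= 2 on (0,1). *)
Lemma weight_rem_bound (a : R) (N : nat) (u : R) : 0 < a -> 0 < u < 1 ->
  0 <= weight_rem a N u <= 2 * (Rpower u (expo a (S N)) / u).
Proof.
  intros Ha Hu. pose proof (curve_den_pos a u Ha Hu).
  pose proof (Rpower_pos u a). pose proof (Rpower_lt_1 a u Ha Hu).
  unfold weight_rem, weight. rewrite Rpower_expo by lra. rewrite <- (tech_pow_Rmult (u * Rpower u a) N).
  set (q := (u * Rpower u a) ^ N).
  assert (Hq : 0 <= q) by (unfold q; apply pow_le; nra).
  assert (Hr : (1 - u ^ 2) / (1 - u * Rpower u a) <= 2).
  { apply Rmult_le_reg_r with (1 - u * Rpower u a); [assumption |].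
    replace ((1 - u ^ 2) / (1 - u * Rpower u a) * (1 - u * Rpower u a)) with (1 - u ^ 2) by (field; lra).
    nra. }
  assert (Hr0 : 0 <= (1 - u ^ 2) / (1 - u * Rpower u a)) by (apply Rdiv_le_0_compat; nra).
  replace (Rpower u a / u * (1 - u ^ 2) / (1 - u * Rpower u a) * (u * Rpower u a * q))
    with ((Rpower u a / u * (u * Rpower u a * q)) * ((1 - u ^ 2) / (1 - u * Rpower u a))) by (field; lra).
  replace (2 * (Rpower u a * (u * Rpower u a * q) / u))
    with ((Rpower u a / u * (u * Rpower u a * q)) * 2) by (field; lra).
  assert (0 <= Rpower u a / u * (u * Rpower u a * q))
    by (apply Rmult_le_pos; [apply Rdiv_le_0_compat; lra | apply Rmult_le_pos; nra]).
  split; [apply Rmult_le_pos; assumption | apply Rmult_le_compat_l; assumption].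
Qed.

Lemma ex_RInt_weight_rem (a d : R) (N : nat) : 0 < a -> 0 < d < 1 / 2 ->
  ex_RInt (weight_rem a N) d (1 - d).
Proof.
  intros Ha Hd. apply (ex_RInt_continuous (V:=R_CompleteNormedModule)). intros z Hz.
  apply weight_rem_continuous; [exact Ha | exact (between_sym_01 d z Hd Hz)].
Qed.

Lemma integral_weight_rem_bound (a d : R) (N : nat) : 0 < a -> 0 < d < 1 / 2 ->
  0 <= RInt (weight_rem a N) d (1 - d) <= 2 / expo a (S N).
Proof.
  intros Ha Hd. set (c := expo a (S N)). assert (Hc : 0 < c) by apply expo_pos, Ha.
  assert (Hex := ex_RInt_weight_rem a d N Ha Hd).
  assert (Hi : is_RInt (fun u => 2 * (Rpower u c / u)) d (1 - d)
                 (2 * Rpower (1 - d) c / c - 2 * Rpower d c / c)).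
  { apply (FTC (fun u => 2 * Rpower u c / c)); intros x Hx; pose proof (between_sym_01 d x Hd Hx).
    - unfold Rpower. auto_derive; [lra |]. field. lra.
    - apply continuous_of_derive. unfold Rpower. auto_derive. lra. }
  split.
  - apply RInt_ge_0; [lra | exact Hex |]. intros x Hx. apply weight_rem_bound; [exact Ha | lra].
  - eapply Rle_trans.
    + apply RInt_le with (g := fun u => 2 * (Rpower u c / u)); [lra | exact Hex | eexists; exact Hi |].
      intros x Hx. apply weight_rem_bound; [exact Ha | lra].
    + rewrite (is_RInt_unique _ _ _ _ Hi).
      assert (Rpower (1 - d) c < 1) by (apply Rpower_lt_1; lra).
      pose proof (Rpower_pos d c). assert (0 < / c) by (apply Rinv_0_lt_compat; lra).
      unfold Rdiv. nra.
Qed.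

Lemma integral_weight_decomp (a d : R) (N : nat) : 0 < a -> 0 < d < 1 / 2 ->
  RInt (weight a) d (1 - d) =
  sum_f_R0 (fun k => weight_term_prim a k (1 - d) - weight_term_prim a k d) N
  + RInt (weight_rem a N) d (1 - d).
Proof.
  intros Ha Hd.
  assert (H := is_RInt_plus (V:=R_NormedModule) _ _ _ _ _ _ (integral_weight_terms a d N Ha Hd)
                 (RInt_correct (V:=R_CompleteNormedModule) _ _ _ (ex_RInt_weight_rem a d N Ha Hd))).
  apply is_RInt_unique. eapply is_RInt_ext; [| exact H].
  intros x Hx. assert (0 < x < 1) by (apply (between_sym_01 d x Hd); lra).
  simpl. unfold plus; simpl. symmetry. apply weight_expansion; assumption.
Qed.

Lemma lim_weight_term_prim (a : R) (k : nat) : 0 < a ->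
  filterlim (fun d => weight_term_prim a k (1 - d) - weight_term_prim a k d) (at_right 0)
            (locally (weight_coef a k)).
Proof.
  intros Ha. pose proof (expo_pos a k Ha).
  apply (lim_val _ (weight_coef a k - (0 / expo a k - 0 / (expo a k + 2)))); [field; lra |].
  apply lim_minus.
  - apply lim_at_1_minus.
    + apply continuous_of_derive. unfold weight_term_prim, Rpower. auto_derive. lra.
    + unfold weight_term_prim, weight_coef. rewrite !Rpower_1_base. reflexivity.
  - unfold weight_term_prim.
    apply lim_minus; apply lim_div; try lra; try apply lim_const; apply lim_Rpower_0; lra.
Qed.

Lemma lim_weight_term_prim_sum (a : R) (N : nat) : 0 < a ->
  filterlim (fun d => sum_f_R0 (fun k => weight_term_prim a k (1 - d) - weight_term_prim a k d) N)
            (at_right 0) (locally (sum_f_R0 (weight_coef a) N)).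
Proof.
  intros Ha. induction N as [| N IH]; simpl; [apply lim_weight_term_prim, Ha |].
  apply lim_plus; [exact IH | apply lim_weight_term_prim, Ha].
Qed.

Lemma expo_bound_small (a eps : R) : 0 < a -> 0 < eps ->
  exists N1, forall N, (N1 <= N)%nat -> 2 / expo a (S N) < eps.
Proof.
  intros Ha He. destruct (nat_above (2 / eps)) as [N1 HN1]. exists N1. intros N HN.
  assert (INR N1 <= INR N) by (apply le_INR; exact HN).
  assert (Hc : INR N + 1 < expo a (S N)) by (unfold expo; rewrite S_INR; pose proof (pos_INR N); nra).
  assert (2 / eps < expo a (S N)) by lra.
  apply Rmult_lt_reg_r with (expo a (S N) / eps).
  { apply Rdiv_lt_0_compat; [pose proof (expo_pos a (S N) Ha); lra | exact He]. }
  replace (2 / expo a (S N) * (expo a (S N) / eps)) with (2 / eps)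
    by (field; split; [lra | pose proof (expo_pos a (S N) Ha); lra]).
  replace (eps * (expo a (S N) / eps)) with (expo a (S N)) by (field; lra). lra.
Qed.

Lemma lim_integral_weight (a J : R) : 0 < a -> is_series (weight_coef a) J ->
  filterlim (fun d => RInt (weight a) d (1 - d)) (at_right 0) (locally J).
Proof.
  intros Ha HJ. apply filterlim_locally. intros eps.
  assert (He3 : 0 < eps / 3) by (destruct eps; simpl; lra).
  destruct (proj1 (filterlim_locally (sum_n (weight_coef a)) J) HJ (mkposreal _ He3)) as [N0 HN0].
  destruct (expo_bound_small a (eps / 3) Ha He3) as [N1 HN1].
  set (N := Nat.max N0 N1).
  assert (HN : 2 / expo a (S N) < eps / 3) by (apply HN1; unfold N; lia).
  assert (HS : Rabs (sum_f_R0 (weight_coef a) N - J) < eps / 3).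
  { rewrite <- sum_n_Reals. apply Rabs_lt_of_ball, (HN0 N). unfold N. lia. }
  assert (HL := proj1 (filterlim_locally _ _) (lim_weight_term_prim_sum a N Ha) (mkposreal _ He3)).
  assert (Hsmall : at_right 0 (fun d => 0 < d < 1 / 2)) by (apply (at_right0_of _ (1 / 2)); auto; lra).
  eapply filter_imp; [| apply filter_and; [exact HL | exact Hsmall]].
  intros d [H1 H2]. apply Rabs_lt_of_ball in H1. simpl in H1.
  apply ball_of_Rabs_lt. rewrite (integral_weight_decomp a d N Ha H2).
  pose proof (integral_weight_rem_bound a d N Ha H2).
  apply Rabs_def2 in H1. apply Rabs_def2 in HS. apply Rabs_def1; destruct eps; simpl in *; lra.
Qed.

Lemma weight_coef_as_term (a : R) (k : nat) : 0 < a ->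
  weight_coef a k = 2 * (a + 1) / a * term a (S k).
Proof.
  intros Ha. rewrite term_closed_form by exact Ha. unfold weight_coef, expo. rewrite S_INR.
  pose proof (pos_INR k). assert (0 < a + (a + 1) * INR k) by nra.
  assert ((a + 1) ^ 2 * (INR k + 1) ^ 2 - 1 <> 0) by nra.
  field. repeat split; try lra; auto.
Qed.

Lemma weight_coef_series (a : R) : 0 < a ->
  is_series (weight_coef a) (2 * (a + 1) / a * series_value a).
Proof.
  intros Ha. eapply is_series_ext; [| exact (is_series_scal_l (2 * (a + 1) / a) _ _ (term_series a Ha))].
  intros n. simpl. rewrite weight_coef_as_term by exact Ha. reflexivity.
Qed.

(* Letting d -> 0+ in [integral_g_along_curve]. *)
Lemma integral_g_0_x0 (a : R) : 0 < a ->
  RInt (g a) 0 (x0 a) = 1 / 2 + x0 a ^ 2 / 2 - series_value a.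
Proof.
  intros Ha.
  set (c := 1 / 2 - 1 / (a + 1)). set (k := a / (2 * (a + 1))).
  set (J := 2 * (a + 1) / a * series_value a).
  assert (L : filterlim (fun d => RInt (g a) (Xcurve a d) (Xcurve a (1 - d))) (at_right 0)
                (locally (c * (1 - 2 * 0) + (x0 a ^ 2 / 2 - - 1 / (a + 1)) - k * J))).
  { eapply lim_ext; [| apply lim_minus; [apply lim_plus |]].
    - apply (at_right0_of _ (1 / 2)); [lra |]. intros d Hd.
      symmetry. apply integral_g_along_curve; assumption.
    - apply lim_mult; [apply lim_const |].
      apply lim_minus; [apply lim_const | apply lim_mult; [apply lim_const | apply lim_id0]].
    - apply lim_minus; [apply lim_curve_prim_1, Ha | apply lim_curve_prim_0, Ha].
    - apply lim_mult; [apply lim_const |].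
      apply lim_integral_weight; [exact Ha | apply weight_coef_series, Ha]. }
  rewrite (filterlim_locally_unique (F := at_right 0) _ _ _ (lim_integral_along_curve a Ha) L).
  assert (Hval : c * (1 - 2 * 0) + (x0 a ^ 2 / 2 - - 1 / (a + 1)) - k * J
                 = 1 / 2 + x0 a ^ 2 / 2 - series_value a) by (unfold c, k, J; field; lra).
  exact Hval.
Qed.

Theorem mainTheorem7 (a : R) (ha : 0 < a) :
  ex_series (fun n : nat => term a (S n)) /\
  is_RInt (g a) 0 1 (1 - Series (fun n : nat => term a (S n))) /\
  1 - Series (fun n : nat => term a (S n)) =
    1 - a / (2 * (a + 1)) - a * PI / (2 * (a + 1) ^ 2) * cot (a * PI / (a + 1)).
Proof.
  pose proof (x0_range a ha).
  assert (HS := term_series a ha).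
  rewrite (is_series_unique _ _ HS).
  split; [exists (series_value a); exact HS |]. split.
  -
    assert (H1 := RInt_correct (V:=R_CompleteNormedModule) _ _ _
                    (ex_RInt_g a 0 (x0 a) ha ltac:(lra) ltac:(lra))).
    assert (HC := is_RInt_Chasles (V:=R_NormedModule) _ _ _ _ _ _ H1 (integral_g_x0_1 a ha)).
    rewrite integral_g_0_x0 in HC by exact ha. unfold plus in HC; simpl in HC.
    replace (1 - series_value a)
      with (1 / 2 + x0 a ^ 2 / 2 - series_value a + (1 - x0 a ^ 2) / 2) by field.
    exact HC.
  - unfold series_value. rewrite cot_complement by exact ha. ring.
Qed.
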